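(* Let $d\in\mathbb{N}_{+}$, $\omega\in\mathbb{R}^d$, $\rho>0$, $m>d+5$, $\beta>0$ with $1/\sqrt\beta\notin\mathbb{Z}$, and $f\in\mathcal{H}^{\rho,m}(\mathbb{T}^{d+1})$. Let $\Omega=\Omega(\sigma,\mu)$ with $\mu$ sufficiently large and $\sigma$ sufficiently small. For $\varepsilon\in\Omega$ let $\mathcal{N}_\varepsilon=\varepsilon(\omega\cdot\partial_\theta)^2+(\omega\cdot\partial_\theta)-\varepsilon\beta\partial_x^4-\varepsilon\partial_x^2$ and $\mathcal{T}_\varepsilon(U)=\varepsilon\mathcal{N}_\varepsilon^{-1}[(U^2)_{xx}+f]$. Then $\mathcal{T}$, defined by $\mathcal{T}(U)_\varepsilon=\mathcal{T}_\varepsilon(U_\varepsilon)$, maps $\mathcal{H}^{\rho,m,\Omega}$ into itself. Precisely, if $\varepsilon\mapsto U_\varepsilon$, $\Omega\to\mathcal{H}^{\rho,m}$, is complex differentiable, then $\varepsilon\mapsto\mathcal{T}_\varepsilon(U_\varepsilon)$, $\Omega\to\mathcal{H}^{\rho,m}$, is also complex differentiable.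
   Context: $\Omega(\sigma,\mu)=\{\varepsilon\in\mathbb{C}:\ \mathrm{Re}\,\varepsilon\ge\mu|\mathrm{Im}\,\varepsilon|,\ \sigma\le|\varepsilon|\le2\sigma\}$. $\mathcal{H}^{\rho,m}$ is the space of analytic $U(\theta,x)=\sum_{k\in\mathbb{Z}^d,j\in\mathbb{Z}}\widehat U_{k,j}e^{\mathrm{i}(k\cdot\theta+jx)}$ on the complex strip of width $\rho$ around $\mathbb{T}^{d+1}$, with $\int_0^{2\pi}U\,dx=0$ (so $\widehat U_{k,0}=0$) and $\|U\|_{\rho,m}^2=\sum|\widehat U_{k,j}|^2e^{2\rho(|k|+|j|)}(|k|^2+|j|^2+1)^m<\infty$. $\mathcal{N}_\varepsilon$ is the Fourier multiplier with symbol $-\varepsilon(k\cdot\omega)^2+\mathrm{i}(k\cdot\omega)-\varepsilon(\beta j^4-j^2)$. $\mathcal{H}^{\rho,m,\Omega}$ is the Banach space of bounded analytic maps $\Omega\to\mathcal{H}^{\rho,m}$ with the supremum norm. *)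

From Stdlib Require Import Reals Lra ZArith List ClassicalEpsilon.
From Coquelicot Require Import Coquelicot.
Open Scope R_scope.

(** Fourier indices (k, j) in Z^d x Z.  k is represented by a list of
    integers; only lists of length d are genuine indices. A function
    U : list Z -> Z -> C is the family of Fourier coefficients
    U k j = \hat U_{k,j} of U(theta,x) = sum U_{k,j} e^{i(k.theta + j x)}. *)
Definition Coef := list Z -> Z -> C.

Definition valid_idx (d : nat) (kj : list Z * Z) : Prop := length (fst kj) = d.

Definition fin_idx (d : nat) (F : list (list Z * Z)) : Prop :=
  NoDup F /\ List.Forall (valid_idx d) F.

Definition sumR (F : list (list Z * Z)) (g : list Z * Z -> R) : R :=
  fold_right Rplus 0 (map g F).
Definition sumC (F : list (list Z * Z)) (g : list Z * Z -> C) : C :=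
  fold_right Cplus (RtoC 0) (map g F).

Definition has_sumC (d : nat) (g : list Z * Z -> C) (S : C) : Prop :=
  forall eps, 0 < eps -> exists F0, fin_idx d F0 /\
    forall F, fin_idx d F -> incl F0 F -> Cmod (Cminus (sumC F g) S) < eps.

(** The sum of a family (defined when it is summable, arbitrary otherwise). *)
Definition csum (d : nat) (g : list Z * Z -> C) : C :=
  epsilon (inhabits (RtoC 0)) (fun S => has_sumC d g S).

Definition absk (k : list Z) : R := fold_right Rplus 0 (map (fun z => Rabs (IZR z)) k).

Definition weight (rho m : R) (k : list Z) (j : Z) : R :=
  exp (2 * rho * (absk k + Rabs (IZR j)))
  * Rpower (absk k ^ 2 + IZR j ^ 2 + 1) m.

Definition sqnorm (d : nat) (rho m : R) (U : Coef) : Rbar :=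
  Lub_Rbar (fun s => exists F, fin_idx d F /\
     s = sumR F (fun kj => (Cmod (U (fst kj) (snd kj)))^2 * weight rho m (fst kj) (snd kj))).

(** Membership in H^{rho,m}: zero x-average and finite norm. *)
Definition in_H (d : nat) (rho m : R) (U : Coef) : Prop :=
  (forall k, length k = d -> U k 0%Z = RtoC 0) /\ is_finite (sqnorm d rho m U).

Definition Hnorm (d : nat) (rho m : R) (U : Coef) : R := sqrt (real (sqnorm d rho m U)).

Definition Omega (sigma mu : R) (e : C) : Prop :=
  mu * Rabs (Im e) <= Re e /\ sigma <= Cmod e <= 2 * sigma.

Definition cdiff_within (d : nat) (rho m : R) (D : C -> Prop)
    (U : C -> Coef) (e0 : C) : Prop :=
  exists V : Coef, in_H d rho m V /\
    forall eta, 0 < eta -> exists delta, 0 < delta /\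
      forall e, D e -> 0 < Cmod (Cminus e e0) < delta ->
        Hnorm d rho m (fun k j =>
           Cminus (Cdiv (Cminus (U e k j) (U e0 k j)) (Cminus e e0)) (V k j)) < eta.

Definition analytic_on (d : nat) (rho m : R) (D : C -> Prop) (U : C -> Coef) : Prop :=
  (forall e, D e -> in_H d rho m (U e)) /\
  (forall e, D e -> cdiff_within d rho m D U e).

Definition in_H_Omega (d : nat) (rho m : R) (D : C -> Prop) (U : C -> Coef) : Prop :=
  analytic_on d rho m D U /\
  exists M, forall e, D e -> Hnorm d rho m (U e) <= M.

Fixpoint dotZR (k : list Z) (w : list R) : R :=
  match k, w with
  | a :: k', b :: w' => IZR a * b + dotZR k' w'
  | _, _ => 0
  end.

Definition subZ (k1 k2 : list Z) : list Z := map (fun p => (fst p - snd p)%Z) (combine k1 k2).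

Definition sqU (d : nat) (U : Coef) : Coef := fun k j =>
  csum d (fun kj1 => Cmult (U (fst kj1) (snd kj1)) (U (subZ k (fst kj1)) (j - snd kj1)%Z)).

Definition Nsym (w : list R) (beta : R) (e : C) (k : list Z) (j : Z) : C :=
  let kw := dotZR k w in
  Cminus (Cplus (Cmult (Copp e) (RtoC (kw ^ 2))) (Cmult Ci (RtoC kw)))
         (Cmult e (RtoC (beta * IZR j ^ 4 - IZR j ^ 2))).

(** T_eps(U) = eps N_eps^{-1} [ (U^2)_xx + f ]   (on zero-mean functions;
    the j = 0 coefficient is 0). *)
Definition T_op (d : nat) (w : list R) (beta : R) (f : Coef) (e : C) (U : Coef) : Coef :=
  fun k j =>
    if Z.eqb j 0 then RtoC 0
    else Cmult e (Cdiv (Cplus (Cmult (RtoC (- IZR j ^ 2)) (sqU d U k j)) (f k j))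
                       (Nsym w beta e k j)).

From Stdlib Require Import Reals Lra Lia ZArith List Permutation Classical ClassicalEpsilon.
From Coquelicot Require Import Coquelicot.
Open Scope R_scope.

(* Coefficientwise, T_e(U) = e (-j^2 (U * U) + f) / N_e, where N_e = -e A + i (k.w) with
   A = (k.w)^2 + beta j^4 - j^2, and * is the convolution of coefficients.

   For m > d + 1 the weighted norm is an algebra norm: the square root of the weight splits into
   an exponential factor, which is submultiplicative, and a polynomial factor, which is
   subadditive up to a constant; the polynomially weighted l^2 norm controls the exponentially
   weighted l^1 norm because the lattice sum of (1 + |k|^2 + j^2)^(-m) converges, and Young's
   inequality then bounds ||U * V|| by ||U|| ||V||.

   On Omega, |e| j^2, j^2, |k.w| and |A| are all at most K |N_e|.  The only obstruction is
   A = 0 = k.w, i.e. beta j^2 = 1; since 1 / sqrt beta is not an integer, |beta j^2 - 1| is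
   bounded below, so A or (k.w)^2 is of size j^2.

   Hence each T_e maps H^{rho,m} to itself, uniformly in e.  Finally the exact identity
   (e / N_e - e0 / N_e0) / (e - e0) = i (k.w) / (N_e N_e0) writes the difference quotient of
   e |-> T_e(U_e) minus its formal derivative as a combination of e - e0 and of the remainder of
   the difference quotient of U, whose norms tend to 0. *)

Definition idx := (list Z * Z)%type.

Definition idx_eq_dec : forall x y : idx, {x = y} + {x <> y}.
Proof. decide equality; [apply Z.eq_dec | apply (list_eq_dec Z.eq_dec)]. Defined.

Lemma sumR_cons x F g : sumR (x :: F) g = g x + sumR F g.
Proof. reflexivity. Qed.

Lemma sumR_app F G g : sumR (F ++ G) g = sumR F g + sumR G g.
Proof. induction F; unfold sumR in *; simpl; [ring|]. rewrite IHF; ring. Qed.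

Lemma sumR_perm F G g : Permutation F G -> sumR F g = sumR G g.
Proof. induction 1; unfold sumR in *; simpl; lra. Qed.

Lemma sumR_add F f g : sumR F (fun x => f x + g x) = sumR F f + sumR F g.
Proof. induction F; unfold sumR in *; simpl; [ring|]. rewrite IHF; ring. Qed.

Lemma sumR_scal F c f : sumR F (fun x => c * f x) = c * sumR F f.
Proof. induction F; unfold sumR in *; simpl; [ring|]. rewrite IHF; ring. Qed.

Lemma sumR_ext F f g : (forall x, In x F -> f x = g x) -> sumR F f = sumR F g.
Proof.
  induction F as [|a F IH]; intros H; [reflexivity|].
  rewrite !sumR_cons, H, IH; auto with datatypes.
Qed.

Lemma sumR_const0 F : sumR F (fun _ => 0) = 0.
Proof. induction F; [reflexivity|]. rewrite sumR_cons, IHF; ring. Qed.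

Lemma sumR_le F f g : (forall x, In x F -> f x <= g x) -> sumR F f <= sumR F g.
Proof.
  induction F as [|a F IH]; intros H; [unfold sumR; simpl; lra|].
  rewrite !sumR_cons. apply Rplus_le_compat; [apply H | apply IH]; auto with datatypes.
Qed.

Lemma sumR_nonneg F f : (forall x, In x F -> 0 <= f x) -> 0 <= sumR F f.
Proof. intros H. rewrite <- (sumR_const0 F). apply sumR_le; auto. Qed.

Lemma sumR_eq0_nonneg G f : (forall x, In x G -> 0 <= f x) -> sumR G f = 0 ->
  forall x, In x G -> f x = 0.
Proof.
  induction G as [|a G IH]; intros Hp Hs x Hx; [contradiction|]. rewrite sumR_cons in Hs.
  assert (0 <= sumR G f) by (apply sumR_nonneg; intros; apply Hp; right; auto).
  assert (0 <= f a) by (apply Hp; left; auto).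
  destruct Hx as [<-|Hx]; [lra|]. apply IH; auto with datatypes; lra.
Qed.

Lemma sumR_map (h : idx -> idx) F g : sumR (map h F) g = sumR F (fun x => g (h x)).
Proof. unfold sumR; rewrite map_map; reflexivity. Qed.

Lemma sumR_comm (F G : list idx) (h : idx -> idx -> R) :
  sumR F (fun x => sumR G (h x)) = sumR G (fun y => sumR F (fun x => h x y)).
Proof.
  induction F as [|a F IH].
  - symmetry. apply (sumR_const0 G).
  - rewrite sumR_cons, IH, <- sumR_add. reflexivity.
Qed.

Lemma sumR_le_incl (G F : list idx) g : NoDup F -> incl F G ->
  (forall x, In x G -> 0 <= g x) -> sumR F g <= sumR G g.
Proof.
  revert F; induction G as [|x G IH]; intros F Hnd Hinc Hpos.
  - destruct F as [|y F]; [simpl; lra|]. exfalso; apply (Hinc y); left; auto.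
  - rewrite sumR_cons. destruct (in_dec idx_eq_dec x F) as [Hin|Hnin].
    + destruct (in_split _ _ Hin) as [a [b ->]].
      rewrite (sumR_perm _ (x :: a ++ b)) by (symmetry; apply Permutation_middle).
      rewrite sumR_cons. apply Rplus_le_compat_l. apply IH.
      * eapply NoDup_remove_1; eauto.
      * intros y Hy. assert (Hy' : In y (a ++ x :: b)).
        { apply in_app_or in Hy; apply in_or_app; destruct Hy; [left|right;right]; auto. }
        destruct (Hinc y Hy') as [<-|]; auto. exfalso; eapply NoDup_remove_2; eauto.
      * intros; apply Hpos; right; auto.
    + assert (0 <= g x) by (apply Hpos; left; auto).
      assert (sumR F g <= sumR G g); [|lra].
      apply IH; auto with datatypes.
      intros y Hy. destruct (Hinc y Hy) as [<-|]; tauto.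
Qed.

Lemma sumR_cauchy_schwarz G a b c : (forall x, In x G -> 0 <= c x) ->
  (sumR G (fun x => a x * b x * c x)) ^ 2
  <= sumR G (fun x => a x ^ 2 * c x) * sumR G (fun x => b x ^ 2 * c x).
Proof.
  intros Hc.
  set (S := sumR G (fun x => b x ^ 2 * c x)).
  set (X := sumR G (fun x => a x * b x * c x)).
  set (P := sumR G (fun x => a x ^ 2 * c x)).
  assert (HS : 0 <= S) by (apply sumR_nonneg; intros; pose proof (Hc x H); nra).
  assert (HP : 0 <= P) by (apply sumR_nonneg; intros; pose proof (Hc x H); nra).
  (* expand the nonnegative quadratic form sum_x c x (a x S - b x X)^2 *)
  assert (E : sumR G (fun x => c x * (a x * S - b x * X) ^ 2) = S * (S * P - X ^ 2)).
  { rewrite (sumR_ext G _ (fun x => S ^ 2 * (a x ^ 2 * c x)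
                + (- 2 * S * X) * (a x * b x * c x) + X ^ 2 * (b x ^ 2 * c x))) by (intros; ring).
    rewrite !sumR_add, !sumR_scal. fold S X P. ring. }
  assert (N : 0 <= sumR G (fun x => c x * (a x * S - b x * X) ^ 2)).
  { apply sumR_nonneg; intros. pose proof (Hc x H). pose proof (pow2_ge_0 (a x * S - b x * X)). nra. }
  destruct (Req_dec S 0) as [S0|S0].
  - assert (X = 0); [|subst S; rewrite H; nra].
    assert (Hb : forall x, In x G -> b x ^ 2 * c x = 0).
    { apply sumR_eq0_nonneg; auto. intros; pose proof (Hc x H); nra. }
    unfold X. rewrite <- (sumR_const0 G). apply sumR_ext. intros x Hx.
    specialize (Hb x Hx). pose proof (Hc x Hx). assert ((b x * c x) ^ 2 = 0) by nra. nra.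
  - rewrite E in N. assert (0 <= S * P - X ^ 2) by (apply (Rmult_le_reg_l S); nra). nra.
Qed.

Lemma sumC_cons x F g : sumC (x :: F) g = Cplus (g x) (sumC F g).
Proof. reflexivity. Qed.

Lemma sumC_components F g : sumC F g = (sumR F (fun x => fst (g x)), sumR F (fun x => snd (g x))).
Proof. induction F; [reflexivity|]. rewrite sumC_cons, IHF. reflexivity. Qed.

Lemma sumC_add F f g : sumC F (fun x => Cplus (f x) (g x)) = Cplus (sumC F f) (sumC F g).
Proof.
  induction F; [apply injective_projections; simpl; ring|].
  rewrite !sumC_cons, IHF. apply injective_projections; simpl; ring.
Qed.

Lemma sumC_scal F c f : sumC F (fun x => Cmult c (f x)) = Cmult c (sumC F f).
Proof.
  induction F; [apply injective_projections; simpl; ring|].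
  rewrite !sumC_cons, IHF. apply injective_projections; simpl; ring.
Qed.

Lemma sumC_ext F f g : (forall x, In x F -> f x = g x) -> sumC F f = sumC F g.
Proof.
  induction F as [|a F IH]; intros H; auto.
  rewrite !sumC_cons, H, IH; auto with datatypes.
Qed.

Lemma Cmod_sumC_le F g : Cmod (sumC F g) <= sumR F (fun x => Cmod (g x)).
Proof.
  induction F; [unfold sumC, sumR; simpl; rewrite Cmod_0; lra|].
  rewrite sumC_cons, sumR_cons. eapply Rle_trans; [apply Cmod_triangle|]. lra.
Qed.

Lemma fin_idx_nil d : fin_idx d nil.
Proof. split; constructor. Qed.

Lemma fin_idx_length d F n : fin_idx d F -> In n F -> length (fst n) = d.
Proof. intros [_ H] Hn. rewrite Forall_forall in H. apply (H n Hn). Qed.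

Definition idx_union (F1 F2 : list idx) : list idx := nodup idx_eq_dec (F1 ++ F2).

Lemma fin_idx_union d F1 F2 : fin_idx d F1 -> fin_idx d F2 -> fin_idx d (idx_union F1 F2).
Proof.
  intros [_ H1] [_ H2]. split; [apply NoDup_nodup|]. apply Forall_forall. intros x Hx.
  apply nodup_In, in_app_or in Hx. rewrite Forall_forall in H1, H2. destruct Hx; auto.
Qed.

Lemma incl_idx_union_l F1 F2 : incl F1 (idx_union F1 F2).
Proof. intros x Hx; apply nodup_In, in_or_app; auto. Qed.

Lemma incl_idx_union_r F1 F2 : incl F2 (idx_union F1 F2).
Proof. intros x Hx; apply nodup_In, in_or_app; auto. Qed.

(* [has_sumC d g S] is convertible to [forall eps, 0 < eps -> eventually_fin d (fun F => Cmod (sumC F g - S) < eps)] *)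
Definition eventually_fin (d : nat) (P : list idx -> Prop) : Prop :=
  exists F0, fin_idx d F0 /\ forall F, fin_idx d F -> incl F0 F -> P F.

Lemma eventually_fin_and d P Q :
  eventually_fin d P -> eventually_fin d Q -> eventually_fin d (fun F => P F /\ Q F).
Proof.
  intros [F1 [H1 P1]] [F2 [H2 P2]]. exists (idx_union F1 F2).
  split; [apply fin_idx_union; auto|]. intros F HF Hinc. split.
  - apply P1; auto. intros y Hy; apply Hinc, incl_idx_union_l; auto.
  - apply P2; auto. intros y Hy; apply Hinc, incl_idx_union_r; auto.
Qed.

Lemma eventually_fin_forall_in d (P : idx -> list idx -> Prop) L :
  (forall n, In n L -> eventually_fin d (P n)) ->
  eventually_fin d (fun G => forall n, In n L -> P n G).
Proof.
  induction L as [|a L IH]; intros H.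
  - exists nil; split; [apply fin_idx_nil|]. intros; contradiction.
  - destruct (eventually_fin_and d _ _ (H a (or_introl eq_refl)) (IH (fun n Hn => H n (or_intror Hn))))
      as [G0 [HG0 HP]].
    exists G0; split; auto. intros G HG Hinc n Hn.
    destruct (HP G HG Hinc) as [Ha HL]. destruct Hn as [<-|Hn]; auto.
Qed.

Lemma eventually_fin_witness d P : eventually_fin d P -> exists F, fin_idx d F /\ P F.
Proof. intros [F0 [H HP]]. exists F0. split; auto. apply HP; auto. apply incl_refl. Qed.

Definition has_sumR (d : nat) (g : idx -> R) (s : R) : Prop :=
  forall eps, 0 < eps -> eventually_fin d (fun F => Rabs (sumR F g - s) < eps).

Lemma Cmod_minus_triangle (a b c : C) : Cmod (Cminus a c) <= Cmod (Cminus a b) + Cmod (Cminus b c).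
Proof. replace (Cminus a c) with (Cplus (Cminus a b) (Cminus b c)) by ring. apply Cmod_triangle. Qed.

Lemma Cmod_minus_sym (a b : C) : Cmod (Cminus a b) = Cmod (Cminus b a).
Proof. replace (Cminus a b) with (Copp (Cminus b a)) by ring. apply Cmod_opp. Qed.

Lemma Cmod_minus_le (a b : C) : Cmod (Cminus a b) <= Cmod a + Cmod b.
Proof. unfold Cminus. eapply Rle_trans; [apply Cmod_triangle|]. rewrite Cmod_opp. lra. Qed.

Lemma Cmod_le_Rabs_add (z : C) : Cmod z <= Rabs (fst z) + Rabs (snd z).
Proof.
  pose proof (Rabs_pos (fst z)); pose proof (Rabs_pos (snd z)).
  rewrite <- (sqrt_pow2 (Rabs (fst z) + Rabs (snd z))) by lra.
  apply sqrt_le_1_alt. rewrite <- (pow2_abs (fst z)), <- (pow2_abs (snd z)). nra.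
Qed.

Lemma has_sumC_unique d g S1 S2 : has_sumC d g S1 -> has_sumC d g S2 -> S1 = S2.
Proof.
  intros H1 H2. apply Ceq_minus, Cmod_eq_0.
  destruct (Req_dec (Cmod (Cminus S1 S2)) 0) as [E|E]; auto. exfalso.
  pose proof (Cmod_ge_0 (Cminus S1 S2)).
  set (eps := Cmod (Cminus S1 S2) / 2).
  destruct (eventually_fin_witness d _ (eventually_fin_and d _ _ (H1 eps ltac:(unfold eps; lra))
                                                        (H2 eps ltac:(unfold eps; lra))))
    as [F [_ [Q1 Q2]]].
  pose proof (Cmod_minus_triangle S1 (sumC F g) S2). rewrite Cmod_minus_sym in Q1.
  unfold eps in *; lra.
Qed.

Lemma csum_eq d g S : has_sumC d g S -> csum d g = S.
Proof.
  intros H. unfold csum. eapply has_sumC_unique; [|apply H].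
  apply (epsilon_spec (inhabits (RtoC 0)) (fun S => has_sumC d g S)). exists S; auto.
Qed.

Lemma has_sumC_add d f g S1 S2 : has_sumC d f S1 -> has_sumC d g S2 ->
  has_sumC d (fun x => Cplus (f x) (g x)) (Cplus S1 S2).
Proof.
  intros H1 H2 eps Heps.
  destruct (eventually_fin_and d _ _ (H1 (eps/2) ltac:(lra)) (H2 (eps/2) ltac:(lra)))
    as [F0 [HF0 P]].
  exists F0; split; auto. intros F HF Hinc. destruct (P F HF Hinc) as [P1 P2].
  rewrite sumC_add.
  replace (Cminus (Cplus (sumC F f) (sumC F g)) (Cplus S1 S2))
    with (Cplus (Cminus (sumC F f) S1) (Cminus (sumC F g) S2)) by ring.
  eapply Rle_lt_trans; [apply Cmod_triangle|]. lra.
Qed.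

Lemma has_sumC_scal d f S c : has_sumC d f S -> has_sumC d (fun x => Cmult c (f x)) (Cmult c S).
Proof.
  intros H eps Heps. pose proof (Cmod_ge_0 c).
  destruct (H (eps / (Cmod c + 1))) as [F0 [Hf P]]; [apply Rdiv_lt_0_compat; lra|].
  exists F0; split; auto. intros F HF Hinc. specialize (P F HF Hinc).
  rewrite sumC_scal.
  replace (Cminus (Cmult c (sumC F f)) (Cmult c S)) with (Cmult c (Cminus (sumC F f) S)) by ring.
  rewrite Cmod_mult. pose proof (Cmod_ge_0 (Cminus (sumC F f) S)).
  apply Rmult_lt_compat_l with (r := Cmod c + 1) in P; [|lra].
  replace ((Cmod c + 1) * (eps / (Cmod c + 1))) with eps in P by (field; lra). nra.
Qed.

Lemma has_sumC_ext d f g S : (forall x, f x = g x) -> has_sumC d f S -> has_sumC d g S.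
Proof.
  intros E H eps Heps. destruct (H eps Heps) as [F0 [Hf P]]. exists F0; split; auto.
  intros F HF Hinc. rewrite <- (sumC_ext F f g) by auto. auto.
Qed.

Lemma has_sumR_nonneg d h L : (forall x, 0 <= h x) -> (forall F, fin_idx d F -> sumR F h <= L) ->
  exists s, has_sumR d h s.
Proof.
  intros Hpos HL.
  set (E := fun s => exists F, fin_idx d F /\ s = sumR F h).
  assert (Hb : bound E) by (exists L; intros x [F [HF ->]]; auto).
  assert (Hne : exists x, E x) by (exists 0, nil; split; [apply fin_idx_nil|reflexivity]).
  destruct (completeness E Hb Hne) as [s [Hub Hlub]].
  exists s. intros eps Heps.
  destruct (classic (exists F0, fin_idx d F0 /\ s - eps < sumR F0 h)) as [[F0 [HF0 Hs]]|Hn].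
  - exists F0; split; auto. intros F HF Hinc.
    assert (sumR F0 h <= sumR F h) by (apply sumR_le_incl; auto; apply HF0).
    assert (sumR F h <= s) by (apply Hub; exists F; auto).
    apply Rabs_def1; lra.
  - exfalso. assert (s <= s - eps); [|lra]. apply Hlub. intros x [F [HF ->]].
    apply Rnot_lt_le. intros Hc. apply Hn. exists F; auto.
Qed.

Lemma has_sumR_abs_bounded d x L : (forall F, fin_idx d F -> sumR F (fun y => Rabs (x y)) <= L) ->
  exists s, has_sumR d x s.
Proof.
  intros HL.
  (* x = (|x| + x) - |x|, a difference of two nonnegative summable families *)
  destruct (has_sumR_nonneg d (fun y => Rabs (x y) + x y) (2 * L)) as [s1 H1].
  { intros y. pose proof (Rle_abs (- x y)). rewrite Rabs_Ropp in H. lra. }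
  { intros F HF. rewrite sumR_add. specialize (HL F HF).
    assert (sumR F x <= sumR F (fun y => Rabs (x y))) by (apply sumR_le; intros; apply Rle_abs). lra. }
  destruct (has_sumR_nonneg d (fun y => Rabs (x y)) L) as [s2 H2]; auto using Rabs_pos.
  exists (s1 - s2). intros eps Heps.
  destruct (eventually_fin_and d _ _ (H1 (eps/2) ltac:(lra)) (H2 (eps/2) ltac:(lra)))
    as [F0 [HF0 P]].
  exists F0; split; auto. intros F HF Hinc. destruct (P F HF Hinc) as [A1 A2].
  rewrite sumR_add in A1. apply Rabs_def2 in A1; apply Rabs_def2 in A2. apply Rabs_def1; lra.
Qed.

Lemma has_sumC_abs_bounded d g L : (forall F, fin_idx d F -> sumR F (fun y => Cmod (g y)) <= L) ->
  exists S, has_sumC d g S.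
Proof.
  intros HL.
  assert (Hfst : forall y, Rabs (fst (g y)) <= Cmod (g y))
    by (intros y; eapply Rle_trans; [apply Rmax_l|apply Rmax_Cmod]).
  assert (Hsnd : forall y, Rabs (snd (g y)) <= Cmod (g y))
    by (intros y; eapply Rle_trans; [apply Rmax_r|apply Rmax_Cmod]).
  destruct (has_sumR_abs_bounded d (fun y => fst (g y)) L) as [s1 H1].
  { intros F HF. eapply Rle_trans; [|apply (HL F HF)]. apply sumR_le; auto. }
  destruct (has_sumR_abs_bounded d (fun y => snd (g y)) L) as [s2 H2].
  { intros F HF. eapply Rle_trans; [|apply (HL F HF)]. apply sumR_le; auto. }
  exists (s1, s2). intros eps Heps.
  destruct (eventually_fin_and d _ _ (H1 (eps/2) ltac:(lra)) (H2 (eps/2) ltac:(lra)))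
    as [F0 [HF0 P]].
  exists F0; split; auto. intros F HF Hinc. destruct (P F HF Hinc) as [A1 A2].
  eapply Rle_lt_trans; [apply Cmod_le_Rabs_add|]. rewrite sumC_components.
  cbn [fst snd Cminus Cplus Copp]. unfold Rminus in A1, A2. lra.
Qed.

Definition wt (rho m : R) (n : idx) : R := weight rho m (fst n) (snd n).
Definition cabs (U : Coef) (n : idx) : R := Cmod (U (fst n) (snd n)).

Definition sq_wnorm_le (d : nat) (rho m : R) (a : idx -> R) (B : R) : Prop :=
  forall F, fin_idx d F -> sumR F (fun n => a n ^ 2 * wt rho m n) <= B.

Lemma cabs_ge0 U n : 0 <= cabs U n.
Proof. apply Cmod_ge_0. Qed.

Lemma absk_ge0 k : 0 <= absk k.
Proof. induction k; unfold absk in *; simpl; [lra|]. pose proof (Rabs_pos (IZR a)); lra. Qed.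

Lemma wt_ge1 rho m n : 0 <= rho -> 0 <= m -> 1 <= wt rho m n.
Proof.
  intros Hr Hm. unfold wt, weight. destruct n as [k j]; cbn [fst snd].
  pose proof (absk_ge0 k). pose proof (Rabs_pos (IZR j)).
  assert (1 <= exp (2 * rho * (absk k + Rabs (IZR j)))).
  { pose proof (exp_ineq1_le (2 * rho * (absk k + Rabs (IZR j)))).
    assert (0 <= 2 * rho * (absk k + Rabs (IZR j))) by (apply Rmult_le_pos; lra). lra. }
  assert (1 <= Rpower (absk k ^ 2 + IZR j ^ 2 + 1) m).
  { rewrite <- (Rpower_O (absk k ^ 2 + IZR j ^ 2 + 1)) at 1 by nra. apply Rle_Rpower; nra. }
  nra.
Qed.

Lemma sqnorm_lub d rho m U :
  (forall F, fin_idx d F -> Rbar_le (sumR F (fun n => cabs U n ^ 2 * wt rho m n)) (sqnorm d rho m U)) /\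
  (forall B, sq_wnorm_le d rho m (cabs U) B -> Rbar_le (sqnorm d rho m U) B).
Proof.
  unfold sqnorm. destruct (Lub_Rbar_correct (fun s => exists F, fin_idx d F /\
     s = sumR F (fun kj => (Cmod (U (fst kj) (snd kj)))^2 * weight rho m (fst kj) (snd kj))))
    as [Hub Hlub].
  split.
  - intros F HF. apply Hub. exists F; split; auto.
  - intros B HB. apply Hlub. intros x [F [HF ->]]. apply (HB F HF).
Qed.

Lemma sqnorm_ge0 d rho m U : Rbar_le 0 (sqnorm d rho m U).
Proof. apply (proj1 (sqnorm_lub d rho m U) nil (fin_idx_nil d)). Qed.

Lemma sqnorm_of_sq_wnorm_le d rho m U B : sq_wnorm_le d rho m (cabs U) B ->
  is_finite (sqnorm d rho m U) /\ 0 <= real (sqnorm d rho m U) <= B.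
Proof.
  intros H. pose proof (proj2 (sqnorm_lub d rho m U) B H). pose proof (sqnorm_ge0 d rho m U).
  destruct (sqnorm d rho m U); simpl in *; try contradiction. repeat split; auto.
Qed.

Lemma sq_wnorm_le_sqnorm d rho m U : in_H d rho m U ->
  sq_wnorm_le d rho m (cabs U) (real (sqnorm d rho m U)) /\ 0 <= real (sqnorm d rho m U).
Proof.
  intros [_ Hf]. pose proof (proj1 (sqnorm_lub d rho m U)) as Hub. pose proof (sqnorm_ge0 d rho m U).
  unfold is_finite in Hf. split.
  - intros F HF. specialize (Hub F HF). destruct (sqnorm d rho m U); simpl in *; auto; discriminate.
  - destruct (sqnorm d rho m U); simpl in *; auto; lra.
Qed.

Lemma in_H_of_sq_wnorm_le d rho m U B : (forall k, length k = d -> U k 0%Z = RtoC 0) ->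
  sq_wnorm_le d rho m (cabs U) B -> in_H d rho m U.
Proof. intros H0 Hb. split; auto. apply (sqnorm_of_sq_wnorm_le _ _ _ _ _ Hb). Qed.

Lemma Hnorm_le_of_sq_wnorm_le d rho m U B : sq_wnorm_le d rho m (cabs U) B -> Hnorm d rho m U <= sqrt B.
Proof.
  intros Hb. destruct (sqnorm_of_sq_wnorm_le _ _ _ _ _ Hb) as [_ [H1 H2]].
  apply sqrt_le_1_alt; auto.
Qed.

Lemma Hnorm_sq d rho m U : in_H d rho m U -> Hnorm d rho m U ^ 2 = real (sqnorm d rho m U).
Proof. intros H. apply pow2_sqrt, (sq_wnorm_le_sqnorm _ _ _ _ H). Qed.

Lemma sqnorm_lt_of_Hnorm_lt d rho m U eta : in_H d rho m U -> 0 < eta ->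
  Hnorm d rho m U < eta -> real (sqnorm d rho m U) < eta ^ 2.
Proof.
  intros H He Hl. rewrite <- Hnorm_sq by auto.
  pose proof (sqrt_pos (real (sqnorm d rho m U))). unfold Hnorm in *. nra.
Qed.

Lemma sqnorm_le_of_Hnorm_le d rho m U M : in_H d rho m U ->
  Hnorm d rho m U <= M -> real (sqnorm d rho m U) <= M ^ 2.
Proof.
  intros H Hl. rewrite <- Hnorm_sq by auto.
  pose proof (sqrt_pos (real (sqnorm d rho m U))). unfold Hnorm in *. nra.
Qed.

Lemma sq_wnorm_le_dom d rho m a b B : 0 <= rho -> 0 <= m ->
  (forall n, length (fst n) = d -> 0 <= a n <= b n) ->
  sq_wnorm_le d rho m b B -> sq_wnorm_le d rho m a B.
Proof.
  intros Hr Hm H Hb F HF. eapply Rle_trans; [|apply (Hb F HF)]. apply sumR_le. intros n Hn.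
  specialize (H n (fin_idx_length _ _ _ HF Hn)). pose proof (wt_ge1 rho m n Hr Hm).
  apply Rmult_le_compat_r; [lra|]. apply pow_incr; lra.
Qed.

Lemma sq_wnorm_le_add d rho m a b A B : 0 <= rho -> 0 <= m ->
  sq_wnorm_le d rho m a A -> sq_wnorm_le d rho m b B ->
  sq_wnorm_le d rho m (fun n => a n + b n) (2 * A + 2 * B).
Proof.
  intros Hr Hm Ha Hb F HF. specialize (Ha F HF); specialize (Hb F HF).
  apply Rle_trans with (sumR F (fun n => 2 * (a n ^ 2 * wt rho m n) + 2 * (b n ^ 2 * wt rho m n))).
  - apply sumR_le. intros n _. pose proof (wt_ge1 rho m n Hr Hm).
    pose proof (pow2_ge_0 (a n - b n)).
    replace (2 * (a n ^ 2 * wt rho m n) + 2 * (b n ^ 2 * wt rho m n))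
      with ((2 * a n ^ 2 + 2 * b n ^ 2) * wt rho m n) by ring.
    apply Rmult_le_compat_r; nra.
  - rewrite sumR_add, !sumR_scal. lra.
Qed.

Lemma sq_wnorm_le_scal d rho m a A c : sq_wnorm_le d rho m a A ->
  sq_wnorm_le d rho m (fun n => c * a n) (c ^ 2 * A).
Proof.
  intros Ha F HF. specialize (Ha F HF). pose proof (pow2_ge_0 c).
  rewrite (sumR_ext F _ (fun n => c ^ 2 * (a n ^ 2 * wt rho m n))), sumR_scal by (intros; ring). nra.
Qed.

Lemma sq_wnorm_le_weaken d rho m a A B : sq_wnorm_le d rho m a A -> A <= B -> sq_wnorm_le d rho m a B.
Proof. intros H HAB F HF. specialize (H F HF). lra. Qed.

Lemma sq_wnorm_le_ge0 d rho m a A : sq_wnorm_le d rho m a A -> 0 <= A.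
Proof. intros H. apply (H nil (fin_idx_nil d)). Qed.

Definition bracket2 (n : idx) : R := absk (fst n) ^ 2 + IZR (snd n) ^ 2 + 1.

Lemma bracket2_ge1 n : 1 <= bracket2 n.
Proof. unfold bracket2. pose proof (pow2_ge_0 (absk (fst n))); pose proof (pow2_ge_0 (IZR (snd n))); lra. Qed.

Definition lsum {A} (l : list A) (g : A -> R) : R := fold_right Rplus 0 (map g l).

Lemma lsum_app {A} (l1 l2 : list A) g : lsum (l1 ++ l2) g = lsum l1 g + lsum l2 g.
Proof. induction l1; unfold lsum in *; simpl; [ring|]. rewrite IHl1; ring. Qed.

Lemma lsum_scal {A} (l : list A) c g : lsum l (fun x => c * g x) = c * lsum l g.
Proof. induction l; unfold lsum in *; simpl; [ring|]. rewrite IHl; ring. Qed.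

Definition zinv (z : Z) : R := / (1 + IZR z ^ 2).

Lemma zinv_pos z : 0 < zinv z.
Proof. apply Rinv_0_lt_compat. pose proof (pow2_ge_0 (IZR z)); lra. Qed.

Fixpoint zrange (N : nat) : list Z :=
  match N with
  | O => 0%Z :: nil
  | S n => Z.of_nat (S n) :: Z.opp (Z.of_nat (S n)) :: zrange n
  end.

Lemma in_zrange N z : (Z.abs_nat z <= N)%nat -> In z (zrange N).
Proof.
  induction N; intros H; simpl; [left; lia|].
  destruct (Nat.eq_dec (Z.abs_nat z) (S N)).
  - destruct (Z.abs_spec z) as [[? ?]|[? ?]]; [left|right; left]; lia.
  - right; right; apply IHN; lia.
Qed.

Lemma lsum_zrange_nonneg N : 0 <= lsum (zrange N) zinv.
Proof.
  induction N; unfold lsum in *; simpl; pose proof (zinv_pos 0%Z); [lra|].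
  pose proof (zinv_pos (Z.pos (Pos.of_succ_nat N))); pose proof (zinv_pos (Z.neg (Pos.of_succ_nat N))). lra.
Qed.

Lemma lsum_zrange_le N : lsum (zrange N) zinv <= 5 - 4 / (INR N + 1).
Proof.
  induction N.
  - unfold lsum, zinv; simpl. replace (1 + 0 * (0 * 1)) with 1 by ring. replace (0 + 1) with 1 by ring. lra.
  - unfold lsum in *; cbn [zrange map fold_right]. fold (lsum (zrange N) zinv) in *. unfold zinv at 1 2.
    rewrite opp_IZR, <- INR_IZR_INZ, S_INR.
    set (x := INR N + 1) in *. assert (1 <= x) by (unfold x; pose proof (pos_INR N); lra).
    replace ((- x) ^ 2) with (x ^ 2) by ring.
    (* telescoping: 1 / (1 + x^2) <= 2 / x - 2 / (x + 1) *)
    assert (/ (1 + x ^ 2) <= 2 / x - 2 / (x + 1)).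
    { replace (2 / x - 2 / (x + 1)) with (2 / (x * (x + 1))) by (field; lra).
      apply Rmult_le_reg_l with ((1 + x ^ 2) * (x * (x + 1))); [nra|].
      replace ((1 + x ^ 2) * (x * (x + 1)) * / (1 + x ^ 2)) with (x * (x + 1)) by (field; nra).
      replace ((1 + x ^ 2) * (x * (x + 1)) * (2 / (x * (x + 1)))) with (2 * (1 + x ^ 2)) by (field; nra).
      nra. }
    lra.
Qed.

Fixpoint zbox (d N : nat) : list (list Z) :=
  match d with
  | O => nil :: nil
  | S d' => flat_map (fun z => map (cons z) (zbox d' N)) (zrange N)
  end.

Definition zinv_prod (k : list Z) : R := fold_right Rmult 1 (map zinv k).

Lemma zinv_prod_pos k : 0 < zinv_prod k.
Proof. induction k; unfold zinv_prod in *; simpl; [lra|]. pose proof (zinv_pos a); nra. Qed.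

Lemma lsum_flat_map_cons (Zl : list Z) (B : list (list Z)) :
  lsum (flat_map (fun z => map (cons z) B) Zl) zinv_prod = lsum Zl zinv * lsum B zinv_prod.
Proof.
  induction Zl as [|a Zl IH]; simpl; [unfold lsum; simpl; ring|].
  rewrite lsum_app, IH. unfold lsum at 1 3; simpl. rewrite map_map.
  change (fun x => zinv_prod (a :: x)) with (fun x => zinv a * zinv_prod x).
  fold (lsum B (fun x => zinv a * zinv_prod x)). rewrite lsum_scal. unfold lsum; simpl; ring.
Qed.

Lemma lsum_zbox d N : lsum (zbox d N) zinv_prod = lsum (zrange N) zinv ^ d.
Proof. induction d; simpl; [unfold lsum, zinv_prod; simpl; ring|]. rewrite lsum_flat_map_cons, IHd. ring. Qed.

Lemma in_zbox d N k : length k = d -> (forall z, In z k -> (Z.abs_nat z <= N)%nat) -> In k (zbox d N).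
Proof.
  revert d; induction k; intros d Hl Hz; destruct d; simpl in *; try discriminate; auto.
  apply in_flat_map. exists a. split; [apply in_zrange, Hz; auto|]. apply in_map, IHk; auto.
Qed.

Lemma sumR_list_prod (B : list (list Z)) (Zl : list Z) :
  sumR (list_prod B Zl) (fun n => zinv_prod (fst n) * zinv (snd n)) = lsum B zinv_prod * lsum Zl zinv.
Proof.
  induction B as [|a B IH]; simpl; [unfold lsum, sumR; simpl; ring|]. rewrite sumR_app, IH.
  assert (E : sumR (map (fun y => (a, y)) Zl) (fun n => zinv_prod (fst n) * zinv (snd n))
              = zinv_prod a * lsum Zl zinv).
  { unfold sumR. rewrite map_map. exact (lsum_scal Zl (zinv_prod a) zinv). }
  rewrite E. unfold lsum; simpl. fold (lsum B zinv_prod). ring.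
Qed.

Definition idx_height (n : idx) : nat :=
  Nat.max (Z.abs_nat (snd n)) (fold_right Nat.max 0%nat (map Z.abs_nat (fst n))).
Definition idx_list_height (G : list idx) : nat := fold_right Nat.max 0%nat (map idx_height G).

Lemma le_fold_max (l : list nat) x : In x l -> (x <= fold_right Nat.max 0 l)%nat.
Proof. induction l; simpl; intros H; [contradiction|]. destruct H; subst; [lia|]. specialize (IHl H); lia. Qed.

Lemma idx_list_height_spec G n : In n G ->
  (Z.abs_nat (snd n) <= idx_list_height G)%nat /\
  forall z, In z (fst n) -> (Z.abs_nat z <= idx_list_height G)%nat.
Proof.
  intros H. assert (idx_height n <= idx_list_height G)%nat by (apply le_fold_max, in_map; auto).
  unfold idx_height in H0. split; [lia|]. intros z Hz.
  assert (Z.abs_nat z <= fold_right Nat.max 0%nat (map Z.abs_nat (fst n)))%nat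
    by (apply le_fold_max, in_map; auto). lia.
Qed.

Lemma Rabs_le_absk k z : In z k -> Rabs (IZR z) <= absk k.
Proof.
  induction k; simpl; intros H; [contradiction|]. unfold absk; simpl. fold (absk k).
  pose proof (absk_ge0 k). pose proof (Rabs_pos (IZR a)). destruct H; subst; [lra|]. specialize (IHk H); lra.
Qed.

Lemma zinv_prod_ge k B : 1 <= B -> (forall z, In z k -> 1 + IZR z ^ 2 <= B) -> / B ^ length k <= zinv_prod k.
Proof.
  induction k; intros HB H; simpl; [unfold zinv_prod; simpl; lra|].
  unfold zinv_prod; simpl; fold (zinv_prod k).
  assert (Hk := IHk HB (fun z Hz => H z (or_intror Hz))).
  assert (Ha := H a (or_introl eq_refl)). pose proof (pow2_ge_0 (IZR a)).
  assert (1 <= B ^ length k) by (apply pow_R1_Rle; lra).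
  rewrite Rinv_mult. apply Rmult_le_compat; try (apply Rlt_le, Rinv_0_lt_compat; lra); auto.
  unfold zinv. apply Rinv_le_contravar; lra.
Qed.

(* each of the d + 1 coordinates z of n satisfies 1 + z^2 <= bracket2 n *)
Lemma Rpower_bracket2_inv_le d m n : INR d + 1 <= m -> length (fst n) = d ->
  / Rpower (bracket2 n) m <= zinv_prod (fst n) * zinv (snd n).
Proof.
  intros Hm Hl. pose proof (bracket2_ge1 n).
  assert (A : / bracket2 n ^ d <= zinv_prod (fst n)).
  { rewrite <- Hl. apply zinv_prod_ge; auto. intros z Hz. unfold bracket2.
    pose proof (Rabs_le_absk _ _ Hz). pose proof (Rabs_pos (IZR z)).
    rewrite <- (pow2_abs (IZR z)). pose proof (pow2_ge_0 (IZR (snd n))). nra. }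
  assert (B : / bracket2 n <= zinv (snd n)).
  { unfold zinv. apply Rinv_le_contravar; [pose proof (pow2_ge_0 (IZR (snd n))); lra|].
    unfold bracket2. pose proof (pow2_ge_0 (absk (fst n))); lra. }
  assert (Rpower (bracket2 n) (INR (S d)) <= Rpower (bracket2 n) m)
    by (apply Rle_Rpower; auto; rewrite S_INR; lra).
  rewrite Rpower_pow in H0 by lra. simpl in H0.
  assert (1 <= bracket2 n ^ d) by (apply pow_R1_Rle; lra).
  apply Rle_trans with (/ (bracket2 n * bracket2 n ^ d)); [apply Rinv_le_contravar; nra|].
  rewrite Rinv_mult, Rmult_comm.
  apply Rmult_le_compat; auto; apply Rlt_le, Rinv_0_lt_compat; lra.
Qed.

Lemma sumR_Rpower_bracket2_inv_le d m G : INR d + 1 <= m -> fin_idx d G ->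
  sumR G (fun n => / Rpower (bracket2 n) m) <= 5 ^ S d.
Proof.
  intros Hm HG. set (N := idx_list_height G).
  apply Rle_trans with (sumR (list_prod (zbox d N) (zrange N)) (fun n => zinv_prod (fst n) * zinv (snd n))).
  - apply Rle_trans with (sumR G (fun n => zinv_prod (fst n) * zinv (snd n))).
    + apply sumR_le. intros n Hn. apply (Rpower_bracket2_inv_le d); auto. eapply fin_idx_length; eauto.
    + apply sumR_le_incl; [apply HG| |].
      * intros [k j] Hn. destruct (idx_list_height_spec G (k, j) Hn) as [Hj Hk].
        apply in_prod; [apply in_zbox; auto; apply (fin_idx_length _ _ _ HG Hn)|apply in_zrange; auto].
      * intros x _; pose proof (zinv_prod_pos (fst x)); pose proof (zinv_pos (snd x)); nra.
  - rewrite sumR_list_prod, lsum_zbox. pose proof (lsum_zrange_le N). pose proof (lsum_zrange_nonneg N).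
    assert (0 < 4 / (INR N + 1)) by (apply Rdiv_lt_0_compat; [lra| pose proof (pos_INR N); lra]).
    simpl. rewrite Rmult_comm. apply Rmult_le_compat; try lra; [apply pow_le; auto|apply pow_incr; lra].
Qed.

Definition idx_sub (n n1 : idx) : idx := (subZ (fst n) (fst n1), (snd n - snd n1)%Z).

Lemma subZ_cons a k b k1 : subZ (a :: k) (b :: k1) = (a - b)%Z :: subZ k k1.
Proof. reflexivity. Qed.

Lemma length_subZ k k1 : length k1 = length k -> length (subZ k k1) = length k.
Proof.
  revert k1; induction k; destruct k1; cbn [length]; intros H; try discriminate; auto.
  rewrite subZ_cons; simpl. f_equal. apply IHk. lia.
Qed.

Lemma subZ_inj_l k k' k1 : length k = length k1 -> length k' = length k1 ->
  subZ k k1 = subZ k' k1 -> k = k'.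
Proof.
  revert k' k1; induction k; destruct k', k1; cbn [length]; intros H1 H2 H3; try discriminate; auto.
  rewrite !subZ_cons in H3. injection H3; intros. f_equal; [lia|]. apply (IHk k' k1); auto.
Qed.

Lemma subZ_inj_r k k1 k1' : length k1 = length k -> length k1' = length k ->
  subZ k k1 = subZ k k1' -> k1 = k1'.
Proof.
  revert k1 k1'; induction k; destruct k1, k1'; cbn [length]; intros H1 H2 H3; try discriminate; auto.
  rewrite !subZ_cons in H3. injection H3; intros. f_equal; [lia|]. apply (IHk k1 k1'); auto.
Qed.

Lemma absk_subZ_triangle k k1 : length k1 = length k -> absk k <= absk k1 + absk (subZ k k1).
Proof.
  revert k1; induction k; destruct k1; cbn [length]; intros H; try discriminate; [unfold absk; simpl; lra|].
  rewrite subZ_cons. unfold absk; simpl; fold (absk k) (absk k1) (absk (subZ k k1)).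
  specialize (IHk k1 ltac:(lia)). rewrite minus_IZR.
  pose proof (Rabs_triang (IZR z) (IZR a - IZR z)). replace (IZR z + (IZR a - IZR z)) with (IZR a) in H0 by ring.
  lra.
Qed.

Lemma idx_sub_length d n n1 : length (fst n) = d -> length (fst n1) = d -> length (fst (idx_sub n n1)) = d.
Proof. intros. unfold idx_sub; simpl. rewrite length_subZ; lia. Qed.

Lemma NoDup_map_in (f : idx -> idx) l : (forall x y, In x l -> In y l -> f x = f y -> x = y) ->
  NoDup l -> NoDup (map f l).
Proof.
  induction l; intros Hi Hn; simpl; constructor.
  - intros Hin. apply in_map_iff in Hin. destruct Hin as [y [Hy Hyl]].
    inversion Hn; subst. assert (y = a) by (apply Hi; simpl; auto). subst; contradiction.
  - inversion Hn; subst. apply IHl; auto. intros; apply Hi; simpl; auto.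
Qed.

Lemma fin_idx_map_sub_l d n G : length (fst n) = d -> fin_idx d G -> fin_idx d (map (idx_sub n) G).
Proof.
  intros Hn HG. split.
  - apply NoDup_map_in; [|apply HG]. intros [x1 x2] [y1 y2] Hx Hy E. unfold idx_sub in E; simpl in E.
    injection E; intros E2 E1.
    pose proof (fin_idx_length _ _ _ HG Hx); pose proof (fin_idx_length _ _ _ HG Hy). simpl in *.
    f_equal; [apply (subZ_inj_r (fst n)); auto; lia|lia].
  - apply Forall_forall. intros x Hx. apply in_map_iff in Hx. destruct Hx as [y [<- Hy]].
    apply idx_sub_length; auto. eapply fin_idx_length; eauto.
Qed.

Lemma fin_idx_map_sub_r d n1 F : length (fst n1) = d -> fin_idx d F ->
  fin_idx d (map (fun n => idx_sub n n1) F).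
Proof.
  intros Hn HF. split.
  - apply NoDup_map_in; [|apply HF]. intros [x1 x2] [y1 y2] Hx Hy E. unfold idx_sub in E; simpl in E.
    injection E; intros E2 E1.
    pose proof (fin_idx_length _ _ _ HF Hx); pose proof (fin_idx_length _ _ _ HF Hy). simpl in *.
    f_equal; [apply (subZ_inj_l _ _ (fst n1)); auto; lia|lia].
  - apply Forall_forall. intros x Hx. apply in_map_iff in Hx. destruct Hx as [y [<- Hy]].
    apply idx_sub_length; auto. eapply fin_idx_length; eauto.
Qed.

Definition ewt (rho : R) (n : idx) : R := exp (rho * (absk (fst n) + Rabs (IZR (snd n)))).
Definition pwt (m : R) (n : idx) : R := Rpower (bracket2 n) (m / 2).
Definition swt (rho m : R) (n : idx) : R := ewt rho n * pwt m n.

Lemma ewt_pos rho n : 0 < ewt rho n.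
Proof. apply exp_pos. Qed.

Lemma pwt_pos m n : 0 < pwt m n.
Proof. apply exp_pos. Qed.

Lemma swt_pos rho m n : 0 < swt rho m n.
Proof. apply Rmult_lt_0_compat; [apply ewt_pos|apply pwt_pos]. Qed.

Lemma pwt_sq m n : pwt m n ^ 2 = Rpower (bracket2 n) m.
Proof. unfold pwt. simpl. rewrite Rmult_1_r, <- Rpower_plus. f_equal; field. Qed.

Lemma wt_swt rho m n : wt rho m n = swt rho m n ^ 2.
Proof.
  unfold wt, weight, swt, ewt. rewrite Rpow_mult_distr, pwt_sq. f_equal.
  simpl. rewrite Rmult_1_r, <- exp_plus. f_equal. ring.
Qed.

Lemma ewt_sub_le rho n n1 : 0 <= rho -> length (fst n1) = length (fst n) ->
  ewt rho n <= ewt rho n1 * ewt rho (idx_sub n n1).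
Proof.
  intros Hr Hl. unfold ewt. rewrite <- exp_plus.
  assert (A := absk_subZ_triangle _ _ Hl). unfold idx_sub; cbn [fst snd]. rewrite minus_IZR.
  pose proof (Rabs_triang (IZR (snd n1)) (IZR (snd n) - IZR (snd n1))) as T.
  replace (IZR (snd n1) + (IZR (snd n) - IZR (snd n1))) with (IZR (snd n)) in T by ring.
  match goal with |- exp ?x <= exp ?y => destruct (Req_dec x y) as [->|Hne] end; [lra|].
  left. apply exp_increasing. nra.
Qed.

Lemma bracket2_sub_le n n1 : length (fst n1) = length (fst n) ->
  bracket2 n <= 2 * bracket2 n1 + 2 * bracket2 (idx_sub n n1).
Proof.
  intros Hl. assert (A := absk_subZ_triangle _ _ Hl).
  pose proof (absk_ge0 (fst n)). pose proof (absk_ge0 (fst n1)). pose proof (absk_ge0 (subZ (fst n) (fst n1))).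
  unfold bracket2, idx_sub; cbn [fst snd]. rewrite minus_IZR.
  set (a := absk (fst n)) in *. set (a1 := absk (fst n1)) in *. set (a2 := absk (subZ (fst n) (fst n1))) in *.
  set (j := IZR (snd n)). set (j1 := IZR (snd n1)).
  assert (a ^ 2 <= (a1 + a2) ^ 2) by (apply pow_incr; lra).
  pose proof (pow2_ge_0 (j1 - (j - j1))). pose proof (pow2_ge_0 (a1 - a2)). nra.
Qed.

Lemma pwt_sub_le m n n1 : 0 <= m -> length (fst n1) = length (fst n) ->
  pwt m n <= Rpower 4 (m / 2) * (pwt m n1 + pwt m (idx_sub n n1)).
Proof.
  intros Hm Hl. pose proof (bracket2_sub_le n n1 Hl).
  pose proof (bracket2_ge1 n). pose proof (bracket2_ge1 n1). pose proof (bracket2_ge1 (idx_sub n n1)).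
  set (M := Rmax (bracket2 n1) (bracket2 (idx_sub n n1))).
  assert (HM : 1 <= M) by (apply Rle_trans with (bracket2 n1); [lra|apply Rmax_l]).
  unfold pwt. apply Rle_trans with (Rpower (4 * M) (m / 2)).
  { apply Rle_Rpower_l; [lra|]. split; [lra|].
    assert (bracket2 n1 <= M) by apply Rmax_l. assert (bracket2 (idx_sub n n1) <= M) by apply Rmax_r. lra. }
  rewrite <- Rpower_mult_distr by lra. apply Rmult_le_compat_l; [left; apply exp_pos|].
  pose proof (exp_pos (m / 2 * ln (bracket2 n1))). pose proof (exp_pos (m / 2 * ln (bracket2 (idx_sub n n1)))).
  unfold M, Rmax; destruct (Rle_dec _ _); unfold Rpower in *; lra.
Qed.

Lemma swt_sub_le rho m n n1 : 0 <= rho -> 0 <= m -> length (fst n1) = length (fst n) ->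
  swt rho m n <= Rpower 4 (m / 2) *
    (swt rho m n1 * ewt rho (idx_sub n n1) + ewt rho n1 * swt rho m (idx_sub n n1)).
Proof.
  intros Hr Hm Hl. unfold swt. pose proof (ewt_sub_le rho n n1 Hr Hl). pose proof (pwt_sub_le m n n1 Hm Hl).
  pose proof (ewt_pos rho n). pose proof (pwt_pos m n). pose proof (ewt_pos rho n1).
  pose proof (ewt_pos rho (idx_sub n n1)). pose proof (pwt_pos m n1). pose proof (pwt_pos m (idx_sub n n1)).
  apply Rle_trans with ((ewt rho n1 * ewt rho (idx_sub n n1)) *
                        (Rpower 4 (m / 2) * (pwt m n1 + pwt m (idx_sub n n1)))); [apply Rmult_le_compat; lra|].
  lra.
Qed.

Definition wcoef (rho m : R) (X : Coef) (n : idx) : R := cabs X n * swt rho m n.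
Definition ecoef (rho : R) (X : Coef) (n : idx) : R := cabs X n * ewt rho n.

Lemma ecoef_ge0 rho X n : 0 <= ecoef rho X n.
Proof. pose proof (cabs_ge0 X n); pose proof (ewt_pos rho n). unfold ecoef. nra. Qed.

Lemma sumR_wcoef_sq_le d rho m X SX G : sq_wnorm_le d rho m (cabs X) SX -> fin_idx d G ->
  sumR G (fun n => wcoef rho m X n ^ 2) <= SX.
Proof.
  intros H HG. eapply Rle_trans; [|apply (H G HG)]. right. apply sumR_ext.
  intros. unfold wcoef. rewrite wt_swt. ring.
Qed.

Lemma sumR_ecoef_le d rho m X SX G : INR d + 1 <= m -> sq_wnorm_le d rho m (cabs X) SX -> fin_idx d G ->
  sumR G (ecoef rho X) <= sqrt (5 ^ S d * SX).
Proof.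
  intros Hm H HG.
  assert (E : sumR G (ecoef rho X) = sumR G (fun n => wcoef rho m X n * / pwt m n * 1)).
  { apply sumR_ext. intros. unfold wcoef, ecoef, swt. field. pose proof (pwt_pos m x); lra. }
  assert (CS := sumR_cauchy_schwarz G (wcoef rho m X) (fun n => / pwt m n) (fun _ => 1)
                  ltac:(intros; lra)).
  cbv beta in CS. rewrite <- E in CS.
  assert (Z1 : sumR G (fun x => (/ pwt m x) ^ 2 * 1) <= 5 ^ S d).
  { eapply Rle_trans; [|apply (sumR_Rpower_bracket2_inv_le d m G Hm HG)]. right; apply sumR_ext.
    intros. rewrite <- pwt_sq. field. pose proof (pwt_pos m x); lra. }
  assert (Z2 : sumR G (fun x => wcoef rho m X x ^ 2 * 1) <= SX).
  { eapply Rle_trans; [|apply (sumR_wcoef_sq_le d rho m X SX G H HG)]. right; apply sumR_ext; intros; ring. }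
  assert (0 <= sumR G (ecoef rho X)) by (apply sumR_nonneg; intros; apply ecoef_ge0).
  assert (0 <= sumR G (fun x => (/ pwt m x) ^ 2 * 1)) by (apply sumR_nonneg; intros; nra).
  assert (0 <= sumR G (fun x => wcoef rho m X x ^ 2 * 1)) by (apply sumR_nonneg; intros; nra).
  rewrite <- (sqrt_pow2 (sumR G (ecoef rho X))) by auto. apply sqrt_le_1_alt.
  eapply Rle_trans; [apply CS|]. rewrite Rmult_comm. apply Rmult_le_compat; auto.
Qed.

Lemma sumR_row_cauchy_schwarz (F G : list idx) (kappa y : idx -> idx -> R) L :
  (forall n n1, 0 <= kappa n n1) -> (forall n, In n F -> sumR G (kappa n) <= L) ->
  sumR F (fun n => (sumR G (fun n1 => kappa n n1 * y n n1)) ^ 2)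
  <= L * sumR G (fun n1 => sumR F (fun n => kappa n n1 * y n n1 ^ 2)).
Proof.
  intros Hk HL. rewrite <- sumR_comm, <- sumR_scal. apply sumR_le. intros n Hn.
  assert (CS := sumR_cauchy_schwarz G (y n) (fun _ => 1) (kappa n) ltac:(intros; auto)).
  cbv beta in CS.
  rewrite (sumR_ext G (fun x => y n x * 1 * kappa n x) (fun n1 => kappa n n1 * y n n1)) in CS by (intros; ring).
  rewrite (sumR_ext G (fun x => 1 ^ 2 * kappa n x) (kappa n)) in CS by (intros; ring).
  rewrite (sumR_ext G (fun x => y n x ^ 2 * kappa n x) (fun n1 => kappa n n1 * y n n1 ^ 2)) in CS by (intros; ring).
  assert (0 <= sumR G (fun n1 => kappa n n1 * y n n1 ^ 2))
    by (apply sumR_nonneg; intros; pose proof (Hk n x); pose proof (pow2_ge_0 (y n x)); nra).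
  eapply Rle_trans; [apply CS|]. rewrite Rmult_comm. apply Rmult_le_compat_r; auto.
Qed.

Section Young.

Variables (d : nat) (rho m : R) (A B : Coef) (SA SB : R) (F G : list idx).
Hypotheses (Hm : INR d + 1 <= m) (HA : sq_wnorm_le d rho m (cabs A) SA)
  (HB : sq_wnorm_le d rho m (cabs B) SB) (HF : fin_idx d F) (HG : fin_idx d G).

Lemma young_wcoef_ecoef :
  sumR F (fun n => (sumR G (fun n1 => wcoef rho m A n1 * ecoef rho B (idx_sub n n1))) ^ 2)
  <= 5 ^ S d * SB * SA.
Proof.
  set (LB := sqrt (5 ^ S d * SB)).
  assert (LB2 : LB ^ 2 = 5 ^ S d * SB).
  { apply pow2_sqrt. apply Rmult_le_pos; [apply pow_le; lra|apply (sq_wnorm_le_ge0 _ _ _ _ _ HB)]. }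
  assert (LB0 : 0 <= LB) by apply sqrt_pos.
  assert (Hshift_l : forall n, In n F -> sumR G (fun n1 => ecoef rho B (idx_sub n n1)) <= LB).
  { intros n Hn. rewrite <- (sumR_map (idx_sub n) G (ecoef rho B)).
    apply (sumR_ecoef_le d rho m B SB); auto. apply fin_idx_map_sub_l; auto. apply (fin_idx_length d F); auto. }
  rewrite (sumR_ext F _ (fun n => (sumR G (fun n1 => ecoef rho B (idx_sub n n1) * wcoef rho m A n1)) ^ 2))
    by (intros; f_equal; apply sumR_ext; intros; ring).
  eapply Rle_trans.
  { apply (sumR_row_cauchy_schwarz F G (fun n n1 => ecoef rho B (idx_sub n n1)) (fun _ n1 => wcoef rho m A n1) LB);
      auto using ecoef_ge0. }
  apply Rle_trans with (LB * sumR G (fun n1 => LB * wcoef rho m A n1 ^ 2)).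
  - apply Rmult_le_compat_l; auto. apply sumR_le. intros n1 Hn1.
    rewrite (sumR_ext F _ (fun n => wcoef rho m A n1 ^ 2 * ecoef rho B (idx_sub n n1))) by (intros; ring).
    rewrite sumR_scal, Rmult_comm. apply Rmult_le_compat_r; [apply pow2_ge_0|].
    rewrite <- (sumR_map (fun n => idx_sub n n1) F (ecoef rho B)).
    apply (sumR_ecoef_le d rho m); auto. apply fin_idx_map_sub_r; auto. eapply fin_idx_length; eauto.
  - rewrite sumR_scal. pose proof (sumR_wcoef_sq_le d rho m A SA G HA HG).
    replace (5 ^ S d * SB * SA) with (LB * (LB * SA)) by (rewrite <- LB2; ring).
    apply Rmult_le_compat_l; auto. apply Rmult_le_compat_l; auto.
Qed.

Lemma young_ecoef_wcoef :
  sumR F (fun n => (sumR G (fun n1 => ecoef rho A n1 * wcoef rho m B (idx_sub n n1))) ^ 2)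
  <= 5 ^ S d * SA * SB.
Proof.
  set (LA := sqrt (5 ^ S d * SA)).
  assert (LA2 : LA ^ 2 = 5 ^ S d * SA).
  { apply pow2_sqrt. apply Rmult_le_pos; [apply pow_le; lra|apply (sq_wnorm_le_ge0 _ _ _ _ _ HA)]. }
  assert (LA0 : 0 <= LA) by apply sqrt_pos.
  pose proof (sq_wnorm_le_ge0 _ _ _ _ _ HB).
  eapply Rle_trans.
  { apply (sumR_row_cauchy_schwarz F G (fun _ n1 => ecoef rho A n1) (fun n n1 => wcoef rho m B (idx_sub n n1)) LA);
      auto using ecoef_ge0. intros; apply (sumR_ecoef_le d rho m A SA); auto. }
  apply Rle_trans with (LA * sumR G (fun n1 => SB * ecoef rho A n1)).
  - apply Rmult_le_compat_l; auto. apply sumR_le. intros n1 Hn1.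
    rewrite sumR_scal, Rmult_comm. apply Rmult_le_compat_r; [apply ecoef_ge0|].
    rewrite <- (sumR_map (fun n => idx_sub n n1) F (fun n => wcoef rho m B n ^ 2)).
    apply (sumR_wcoef_sq_le d rho m); auto. apply fin_idx_map_sub_r; auto. eapply fin_idx_length; eauto.
  - rewrite sumR_scal. pose proof (sumR_ecoef_le d rho m A SA G Hm HA HG).
    replace (5 ^ S d * SA * SB) with (LA * (SB * LA)) by (rewrite <- LA2; ring).
    apply Rmult_le_compat_l; auto. apply Rmult_le_compat_l; auto.
Qed.

End Young.

Definition conv (d : nat) (A B : Coef) : Coef := fun k j =>
  csum d (fun n1 => Cmult (A (fst n1) (snd n1)) (B (subZ k (fst n1)) (j - snd n1)%Z)).

Definition conv_term (A B : Coef) (n n1 : idx) : C :=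
  Cmult (A (fst n1) (snd n1)) (B (fst (idx_sub n n1)) (snd (idx_sub n n1))).

Lemma Cmod_conv_term A B n n1 : Cmod (conv_term A B n n1) = cabs A n1 * cabs B (idx_sub n n1).
Proof. apply Cmod_mult. Qed.

Definition conv_const (d : nat) (m : R) : R := 8 * Rpower 4 (m / 2) ^ 2 * 5 ^ S d.

Lemma conv_const_ge0 d m : 0 <= conv_const d m.
Proof.
  unfold conv_const. pose proof (pow2_ge_0 (Rpower 4 (m / 2))).
  assert (0 <= 5 ^ S d) by (apply pow_le; lra). nra.
Qed.

Section Convolution.

Variables (d : nat) (rho m : R).
Hypotheses (Hrho : 0 <= rho) (Hm : INR d + 1 <= m).

Let Hm0 : 0 <= m.
Proof. pose proof (pos_INR d); lra. Qed.

Lemma sumR_conv_term_le A B SA SB n G : length (fst n) = d ->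
  sq_wnorm_le d rho m (cabs A) SA -> sq_wnorm_le d rho m (cabs B) SB -> fin_idx d G ->
  sumR G (fun n1 => cabs A n1 * cabs B (idx_sub n n1)) <= (SA + SB) / 2.
Proof.
  intros Hn HA HB HG.
  assert (S1 := HA G HG). assert (S2 := HB _ (fin_idx_map_sub_l d n G Hn HG)). rewrite sumR_map in S2.
  apply Rle_trans with (sumR G (fun n1 => / 2 * (cabs A n1 ^ 2 * wt rho m n1)
                                        + / 2 * (cabs B (idx_sub n n1) ^ 2 * wt rho m (idx_sub n n1)))).
  - apply sumR_le. intros x _.
    pose proof (wt_ge1 rho m x Hrho Hm0). pose proof (wt_ge1 rho m (idx_sub n x) Hrho Hm0).
    pose proof (cabs_ge0 A x). pose proof (cabs_ge0 B (idx_sub n x)).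
    pose proof (pow2_ge_0 (cabs A x - cabs B (idx_sub n x))).
    assert (cabs A x ^ 2 <= cabs A x ^ 2 * wt rho m x) by nra.
    assert (cabs B (idx_sub n x) ^ 2 <= cabs B (idx_sub n x) ^ 2 * wt rho m (idx_sub n x)) by nra.
    nra.
  - rewrite sumR_add, !sumR_scal. lra.
Qed.

Lemma has_sumC_conv A B SA SB n : length (fst n) = d ->
  sq_wnorm_le d rho m (cabs A) SA -> sq_wnorm_le d rho m (cabs B) SB ->
  has_sumC d (conv_term A B n) (conv d A B (fst n) (snd n)).
Proof.
  intros Hn HA HB.
  destruct (has_sumC_abs_bounded d (conv_term A B n) ((SA + SB) / 2)) as [S HS].
  { intros G HG.
    rewrite (sumR_ext G _ (fun n1 => cabs A n1 * cabs B (idx_sub n n1))) by (intros; apply Cmod_conv_term).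
    apply sumR_conv_term_le; auto. }
  unfold conv. rewrite (csum_eq d _ S); auto.
Qed.

Lemma swt_mul_conv_le A B n G : length (fst n) = d -> fin_idx d G ->
  swt rho m n * sumR G (fun n1 => cabs A n1 * cabs B (idx_sub n n1)) <=
  Rpower 4 (m / 2) * (sumR G (fun n1 => wcoef rho m A n1 * ecoef rho B (idx_sub n n1))
                      + sumR G (fun n1 => ecoef rho A n1 * wcoef rho m B (idx_sub n n1))).
Proof.
  intros Hn HG. rewrite <- sumR_add, <- !sumR_scal. apply sumR_le. intros x Hx.
  assert (Hl : length (fst x) = length (fst n)) by (rewrite (fin_idx_length _ _ _ HG Hx); auto).
  pose proof (swt_sub_le rho m n x Hrho Hm0 Hl).
  pose proof (cabs_ge0 A x). pose proof (cabs_ge0 B (idx_sub n x)).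
  assert (0 <= cabs A x * cabs B (idx_sub n x)) by nra.
  unfold wcoef, ecoef.
  apply Rle_trans with (Rpower 4 (m / 2) * (swt rho m x * ewt rho (idx_sub n x) + ewt rho x * swt rho m (idx_sub n x))
                        * (cabs A x * cabs B (idx_sub n x))); [apply Rmult_le_compat_r; auto|].
  right; ring.
Qed.

Lemma sumR_conv_partial_le A B SA SB F G :
  sq_wnorm_le d rho m (cabs A) SA -> sq_wnorm_le d rho m (cabs B) SB -> fin_idx d F -> fin_idx d G ->
  sumR F (fun n => (sumR G (fun n1 => cabs A n1 * cabs B (idx_sub n n1))) ^ 2 * wt rho m n)
  <= conv_const d m / 2 * SA * SB.
Proof.
  intros HA HB HF HG. set (C4 := Rpower 4 (m / 2)).
  set (X := fun n => sumR G (fun n1 => wcoef rho m A n1 * ecoef rho B (idx_sub n n1))).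
  set (Y := fun n => sumR G (fun n1 => ecoef rho A n1 * wcoef rho m B (idx_sub n n1))).
  pose proof (pow2_ge_0 C4).
  apply Rle_trans with (sumR F (fun n => 2 * C4 ^ 2 * X n ^ 2 + 2 * C4 ^ 2 * Y n ^ 2)).
  - apply sumR_le. intros n Hn.
    assert (P := swt_mul_conv_le A B n G (fin_idx_length _ _ _ HF Hn) HG). fold C4 (X n) (Y n) in P.
    assert (0 <= sumR G (fun n1 => cabs A n1 * cabs B (idx_sub n n1))).
    { apply sumR_nonneg; intros. pose proof (cabs_ge0 A x); pose proof (cabs_ge0 B (idx_sub n x)); nra. }
    pose proof (swt_pos rho m n). rewrite wt_swt.
    set (s := sumR G (fun n1 => cabs A n1 * cabs B (idx_sub n n1))) in *.
    assert (0 <= swt rho m n * s) by nra.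
    assert ((swt rho m n * s) ^ 2 <= (C4 * (X n + Y n)) ^ 2) by (apply pow_incr; lra).
    pose proof (pow2_ge_0 (X n - Y n)).
    assert (C4 ^ 2 * (X n + Y n) ^ 2 <= C4 ^ 2 * (2 * X n ^ 2 + 2 * Y n ^ 2)) by (apply Rmult_le_compat_l; nra).
    replace (s ^ 2 * swt rho m n ^ 2) with ((swt rho m n * s) ^ 2) by ring. nra.
  - rewrite sumR_add, !sumR_scal.
    pose proof (young_wcoef_ecoef d rho m A B SA SB F G Hm HA HB HF HG).
    pose proof (young_ecoef_wcoef d rho m A B SA SB F G Hm HA HB HF HG).
    apply Rmult_le_compat_l with (r := 2 * C4 ^ 2) in H0; [|lra].
    apply Rmult_le_compat_l with (r := 2 * C4 ^ 2) in H1; [|lra].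
    unfold X, Y.
    replace (conv_const d m / 2 * SA * SB)
      with (2 * C4 ^ 2 * (5 ^ S d * SB * SA) + 2 * C4 ^ 2 * (5 ^ S d * SA * SB))
      by (unfold conv_const; fold C4; field).
    lra.
Qed.

Lemma sq_wnorm_le_conv A B SA SB :
  sq_wnorm_le d rho m (cabs A) SA -> sq_wnorm_le d rho m (cabs B) SB ->
  sq_wnorm_le d rho m (cabs (conv d A B)) (conv_const d m * SA * SB).
Proof.
  intros HA HB F HF.
  set (W := sumR F (wt rho m)).
  assert (HW : 0 <= W) by (apply sumR_nonneg; intros; pose proof (wt_ge1 rho m x Hrho Hm0); lra).
  apply Rle_plus_epsilon. intros eta Heta.
  (* approximate each of the finitely many coefficients by a common partial sum to precision eps *)
  set (eps := Rmin 1 (eta / (2 * W + 1))).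
  assert (He0 : 0 < eps) by (apply Rmin_glb_lt; [lra|apply Rdiv_lt_0_compat; lra]).
  assert (He1 : eps <= 1) by apply Rmin_l.
  assert (He2 : eps * (2 * W + 1) <= eta).
  { pose proof (Rmin_r 1 (eta / (2 * W + 1))). fold eps in H.
    apply Rmult_le_compat_r with (r := 2 * W + 1) in H; [|lra]. field_simplify in H; lra. }
  destruct (eventually_fin_witness d _ (eventually_fin_forall_in d
      (fun n G => Cmod (Cminus (sumC G (conv_term A B n)) (conv d A B (fst n) (snd n))) < eps) F
      (fun n Hn => has_sumC_conv A B SA SB n (fin_idx_length _ _ _ HF Hn) HA HB eps He0)))
    as [G [HG P]].
  apply Rle_trans with (sumR F (fun n => 2 * ((sumR G (fun n1 => cabs A n1 * cabs B (idx_sub n n1))) ^ 2 * wt rho m n)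
                                        + eps * (2 * wt rho m n))).
  - apply sumR_le. intros n Hn. specialize (P n Hn).
    pose proof (Cmod_sumC_le G (conv_term A B n)) as Hs.
    rewrite (sumR_ext G _ (fun n1 => cabs A n1 * cabs B (idx_sub n n1))) in Hs by (intros; apply Cmod_conv_term).
    pose proof (Cmod_minus_triangle (conv d A B (fst n) (snd n)) (sumC G (conv_term A B n)) 0).
    replace (Cminus (conv d A B (fst n) (snd n)) 0) with (conv d A B (fst n) (snd n)) in H by ring.
    replace (Cminus (sumC G (conv_term A B n)) 0) with (sumC G (conv_term A B n)) in H by ring.
    rewrite Cmod_minus_sym in H. pose proof (wt_ge1 rho m n Hrho Hm0).
    pose proof (Cmod_ge_0 (conv d A B (fst n) (snd n))). pose proof (Cmod_ge_0 (sumC G (conv_term A B n))).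
    unfold cabs at 1. set (c := Cmod (conv d A B (fst n) (snd n))) in *.
    set (s := sumR G (fun n1 => cabs A n1 * cabs B (idx_sub n n1))) in *.
    assert (c ^ 2 <= (s + eps) ^ 2) by (apply pow_incr; lra).
    pose proof (pow2_ge_0 (s - eps)).
    assert (Hc : c ^ 2 <= 2 * s ^ 2 + 2 * eps) by nra.
    apply Rmult_le_compat_r with (r := wt rho m n) in Hc; lra.
  - rewrite sumR_add, !sumR_scal. fold W.
    pose proof (sumR_conv_partial_le A B SA SB F G HA HB HF HG). nra.
Qed.

End Convolution.

Lemma int_dist_gap t : (forall n : Z, t <> IZR n) ->
  exists g, 0 < g /\ forall a : Z, g <= Rabs (IZR a - t).
Proof.
  intros Ht. destruct (archimed t) as [U1 U2]. set (u := up t) in *.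
  assert (U3 : IZR u - 1 < t).
  { destruct (Rle_lt_dec t (IZR u - 1)) as [H|H]; auto. exfalso.
    apply (Ht (u - 1)%Z). rewrite minus_IZR. lra. }
  exists (Rmin (t - (IZR u - 1)) (IZR u - t)). split; [apply Rmin_glb_lt; lra|].
  intros a. destruct (Z_le_gt_dec a (u - 1)) as [H|H].
  - apply IZR_le in H. rewrite minus_IZR in H.
    pose proof (Rmin_l (t - (IZR u - 1)) (IZR u - t)). rewrite Rabs_left1; lra.
  - assert (IZR u <= IZR a) by (apply IZR_le; lia).
    pose proof (Rmin_r (t - (IZR u - 1)) (IZR u - t)). rewrite Rabs_right; lra.
Qed.

Lemma beta_sq_gap beta : 0 < beta -> (forall n : Z, / sqrt beta <> IZR n) ->
  exists delta, 0 < delta /\ forall j : Z, j <> 0%Z -> delta <= Rabs (beta * IZR j ^ 2 - 1).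
Proof.
  intros Hb Hn. set (t := / sqrt beta).
  assert (Ht : 0 < t) by (apply Rinv_0_lt_compat, sqrt_lt_R0; auto).
  assert (Ht2 : beta * t ^ 2 = 1).
  { unfold t. rewrite pow_inv, pow2_sqrt by lra. field. lra. }
  destruct (int_dist_gap t Hn) as [g [Hg Hgap]].
  exists (beta * g * t). split; [apply Rmult_lt_0_compat; [apply Rmult_lt_0_compat|]; auto|].
  intros j _. set (a := IZR (Z.abs j)).
  assert (Ha0 : 0 <= a) by (apply IZR_le; lia).
  (* beta j^2 - 1 = beta (|j| - t) (|j| + t) *)
  replace (beta * IZR j ^ 2 - 1) with (beta * (a - t) * (a + t))
    by (rewrite <- Ht2; unfold a; rewrite abs_IZR, <- (pow2_abs (IZR j)); ring).
  rewrite !Rabs_mult, (Rabs_right beta), (Rabs_right (a + t)) by lra.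
  specialize (Hgap (Z.abs j)). fold a in Hgap.
  apply Rmult_le_compat; try lra; [nra|]. apply Rmult_le_compat_l; lra.
Qed.

Lemma IZR_sq_ge1 (j : Z) : j <> 0%Z -> 1 <= IZR j ^ 2.
Proof.
  intros Hj. destruct (Z_lt_le_dec j 0).
  - assert (IZR j <= -1) by (apply IZR_le; lia). nra.
  - assert (1 <= IZR j) by (apply IZR_le; lia). nra.
Qed.

Definition symA (w : list R) (beta : R) (k : list Z) (j : Z) : R :=
  dotZR k w ^ 2 + beta * IZR j ^ 4 - IZR j ^ 2.

Lemma Nsym_eq w beta e k j :
  Nsym w beta e k j = Cplus (Cmult (Copp e) (RtoC (symA w beta k j))) (Cmult Ci (RtoC (dotZR k w))).
Proof. destruct e as [x y]. unfold Nsym, symA. apply injective_projections; simpl; ring. Qed.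

Lemma Cmod_Nsym_sq w beta e k j : Cmod (Nsym w beta e k j) ^ 2 =
  Cmod e ^ 2 * symA w beta k j ^ 2 + dotZR k w ^ 2 - 2 * symA w beta k j * dotZR k w * Im e.
Proof. rewrite Nsym_eq, !Cmod2_alt. destruct e as [x y]. unfold Re, Im; simpl. ring. Qed.

(* Either beta J^2 - 1 >= delta, and then A >= delta J^2, or 1 - beta J^2 >= delta, and then
   |A| or q^2 is at least of order J^2 >= beta J^4. *)
Lemma symbol_sum_lower_bound beta delta q A J E : 0 < beta -> 0 < delta -> 1 <= J ^ 2 ->
  0 <= E <= 4 -> A = q ^ 2 + beta * J ^ 4 - J ^ 2 -> delta <= Rabs (beta * J ^ 2 - 1) ->
  Rmin (delta ^ 2 / 4) (delta * beta / 8) * E * J ^ 4 <= E * A ^ 2 + q ^ 2.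
Proof.
  intros Hb Hd HJ [HE HE4] HA Hc.
  set (c := Rmin (delta ^ 2 / 4) (delta * beta / 8)).
  assert (ca : c <= delta ^ 2 / 4) by apply Rmin_l. assert (cb : c <= delta * beta / 8) by apply Rmin_r.
  assert (cp : 0 < c) by (apply Rmin_glb_lt; nra).
  assert (J4 : J ^ 4 = (J ^ 2) ^ 2) by ring. pose proof (pow2_ge_0 q). pose proof (pow2_ge_0 A).
  assert (HJ4 : 1 <= J ^ 4) by nra.
  destruct (Rle_or_lt 0 (beta * J ^ 2 - 1)) as [Hs|Hs].
  - rewrite Rabs_right in Hc by lra.
    assert (J ^ 2 * delta <= J ^ 2 * (beta * J ^ 2 - 1)) by (apply Rmult_le_compat_l; lra).
    assert (HA' : delta * J ^ 2 <= A)
      by (rewrite HA; replace (beta * J ^ 4) with (J ^ 2 * (beta * J ^ 2)) by ring; nra).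
    assert (delta ^ 2 * J ^ 4 <= A ^ 2)
      by (rewrite J4; replace (delta ^ 2 * (J ^ 2) ^ 2) with ((delta * J ^ 2) ^ 2) by ring; apply pow_incr; nra).
    assert (c * J ^ 4 <= delta ^ 2 * J ^ 4) by (apply Rmult_le_compat_r; nra).
    assert (c * E * J ^ 4 <= E * A ^ 2) by nra. lra.
  - rewrite Rabs_left in Hc by lra.
    destruct (Rle_lt_dec (delta ^ 2 / 4 * J ^ 4) (A ^ 2)) as [H1|H1].
    + assert (c * J ^ 4 <= A ^ 2) by nra. nra.
    + assert (Aabs : Rabs A < delta / 2 * J ^ 2).
      { apply Rnot_le_lt. intros Hn. assert ((delta / 2 * J ^ 2) ^ 2 <= Rabs A ^ 2) by (apply pow_incr; nra).
        rewrite <- pow2_abs in H1. nra. }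
      pose proof (Rle_abs (- A)) as H3. rewrite Rabs_Ropp in H3.
      assert (q ^ 2 = A + J ^ 2 * (1 - beta * J ^ 2)) by (rewrite HA; ring).
      assert (J ^ 2 * delta <= J ^ 2 * (1 - beta * J ^ 2)) by (apply Rmult_le_compat_l; lra).
      assert (q ^ 2 >= delta / 2 * J ^ 2) by lra.
      assert (J ^ 2 >= beta * J ^ 4) by (rewrite J4; nra).
      assert (q ^ 2 >= delta / 2 * beta * J ^ 4) by nra.
      assert (c * E * J ^ 4 <= delta * beta / 8 * 4 * J ^ 4) by (apply Rmult_le_compat_r; nra).
      nra.
Qed.

Lemma Cmod_Nsym_sq_ge w beta e k j : 2 * Rabs (Im e) <= Cmod e ->
  (Cmod e ^ 2 * symA w beta k j ^ 2 + dotZR k w ^ 2) / 2 <= Cmod (Nsym w beta e k j) ^ 2.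
Proof.
  intros Hy. rewrite Cmod_Nsym_sq.
  set (A := symA w beta k j). set (q := dotZR k w).
  pose proof (Rabs_pos A); pose proof (Rabs_pos q); pose proof (Cmod_ge_0 e).
  assert (2 * Rabs (A * q * Im e) <= Cmod e * (Rabs A * Rabs q)).
  { rewrite !Rabs_mult. assert (0 <= Rabs A * Rabs q) by nra.
    replace (2 * (Rabs A * Rabs q * Rabs (Im e))) with ((Rabs A * Rabs q) * (2 * Rabs (Im e))) by ring.
    rewrite (Rmult_comm (Cmod e)). apply Rmult_le_compat_l; auto. }
  assert (Cmod e * (Rabs A * Rabs q) <= (Cmod e ^ 2 * A ^ 2 + q ^ 2) / 2).
  { pose proof (pow2_ge_0 (Cmod e * Rabs A - Rabs q)). rewrite <- (pow2_abs A), <- (pow2_abs q). nra. }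
  pose proof (Rle_abs (A * q * Im e)). lra.
Qed.

Lemma le_of_sq_le a b C : 0 <= a -> 0 <= b -> 0 <= C -> a ^ 2 <= C * b ^ 2 -> a <= (C + 1) * b.
Proof.
  intros Ha Hb HC H. apply Rnot_lt_le; intros Hc.
  assert (0 <= (C + 1) * b) by nra.
  assert (((C + 1) * b) ^ 2 < a ^ 2) by (simpl; rewrite !Rmult_1_r; apply Rmult_le_0_lt_compat; lra).
  pose proof (pow2_ge_0 b). nra.
Qed.

Definition symbol_bounds (D : C -> Prop) (w : list R) (beta K : R) : Prop :=
  forall e k j, D e -> j <> 0%Z ->
    Nsym w beta e k j <> RtoC 0 /\
    Cmod e * IZR j ^ 2 <= K * Cmod (Nsym w beta e k j) /\
    IZR j ^ 2 <= K * Cmod (Nsym w beta e k j) /\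
    Rabs (dotZR k w) <= K * Cmod (Nsym w beta e k j) /\
    Rabs (symA w beta k j) <= K * Cmod (Nsym w beta e k j).

Lemma symbol_ratio_bounds (c sigma E J A q N : R) : 0 < c -> 0 < sigma <= 1 -> sigma <= E -> 0 <= N ->
  1 <= J ^ 2 -> c * E ^ 2 * J ^ 4 <= E ^ 2 * A ^ 2 + q ^ 2 -> (E ^ 2 * A ^ 2 + q ^ 2) / 2 <= N ^ 2 ->
  let K := 2 / (c * sigma ^ 2) + 2 / sigma ^ 2 + 3 in
  0 < N /\ E * J ^ 2 <= K * N /\ J ^ 2 <= K * N /\ Rabs q <= K * N /\ Rabs A <= K * N.
Proof.
  intros Hc [Hs Hs1] HE HN HJ HL HU K.
  assert (s2 : 0 < sigma ^ 2) by (apply pow_lt; lra). assert (s21 : sigma ^ 2 <= 1) by nra.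
  assert (e2 : sigma ^ 2 <= E ^ 2) by (apply pow_incr; lra).
  assert (a : 0 < 2 / (c * sigma ^ 2)) by (apply Rdiv_lt_0_compat; nra).
  assert (b : 0 < 2 / sigma ^ 2) by (apply Rdiv_lt_0_compat; nra).
  assert (Ia : 2 / (c * sigma ^ 2) * (c * sigma ^ 2 / 2) = 1) by (field; lra).
  assert (Ib : 2 / sigma ^ 2 * (sigma ^ 2 / 2) = 1) by (field; lra).
  assert (J4 : J ^ 4 = (J ^ 2) ^ 2) by ring.
  assert (N2a : 0 <= 2 / (c * sigma ^ 2) * N ^ 2) by nra. assert (N2b : 0 <= 2 / sigma ^ 2 * N ^ 2) by nra.
  replace K with ((2 / (c * sigma ^ 2) + 2 / sigma ^ 2 + 2) + 1) by (unfold K; ring).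
  pose proof (pow2_ge_0 q). pose proof (pow2_ge_0 A). pose proof (Rabs_pos q). pose proof (Rabs_pos A).
  repeat split.
  - assert (0 < E ^ 2) by nra. assert (1 <= J ^ 4) by nra.
    assert (0 < c * E ^ 2 * J ^ 4) by (apply Rmult_lt_0_compat; [apply Rmult_lt_0_compat|]; lra).
    destruct HN as [HN|HN]; auto. subst N. lra.
  - apply le_of_sq_le; [nra|auto|lra|].
    assert (c * sigma ^ 2 * (E ^ 2 * J ^ 4) <= c * (E ^ 2 * J ^ 4)) by (apply Rmult_le_compat_r; nra). nra.
  - apply le_of_sq_le; [nra|auto|lra|].
    assert (c * sigma ^ 2 * J ^ 4 <= c * E ^ 2 * J ^ 4) by (apply Rmult_le_compat_r; nra). nra.
  - apply le_of_sq_le; auto; [lra|]. rewrite pow2_abs. nra.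
  - apply le_of_sq_le; auto; [lra|]. rewrite pow2_abs.
    assert (sigma ^ 2 * A ^ 2 <= E ^ 2 * A ^ 2) by (apply Rmult_le_compat_r; nra). nra.
Qed.

Lemma symbol_bounds_Omega w beta sigma mu : 0 < beta -> (forall n : Z, / sqrt beta <> IZR n) ->
  0 < sigma <= 1 -> 2 <= mu -> exists K, 0 < K /\ symbol_bounds (Omega sigma mu) w beta K.
Proof.
  intros Hb Hn Hs Hmu. destruct (beta_sq_gap beta Hb Hn) as [delta [Hd Hdj]].
  set (c := Rmin (delta ^ 2 / 4) (delta * beta / 8)).
  assert (cp : 0 < c) by (apply Rmin_glb_lt; nra).
  exists (2 / (c * sigma ^ 2) + 2 / sigma ^ 2 + 3). split.
  { assert (0 < sigma ^ 2) by (apply pow_lt; lra).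
    assert (0 < 2 / (c * sigma ^ 2)) by (apply Rdiv_lt_0_compat; nra).
    assert (0 < 2 / sigma ^ 2) by (apply Rdiv_lt_0_compat; nra). lra. }
  intros e k j [Ho1 [Ho2 Ho3]] Hj.
  assert (HJ : 1 <= IZR j ^ 2) by (apply IZR_sq_ge1; auto).
  assert (Hy : 2 * Rabs (Im e) <= Cmod e)
    by (pose proof (Rabs_pos (Im e)); pose proof (re_le_Cmod e); pose proof (Rle_abs (Re e)); nra).
  assert (He4 : 0 <= Cmod e ^ 2 <= 4) by (pose proof (Cmod_ge_0 e); split; nra).
  assert (HL := symbol_sum_lower_bound beta delta (dotZR k w) (symA w beta k j) (IZR j) (Cmod e ^ 2) Hb Hd HJ
                  He4 eq_refl (Hdj j Hj)).
  fold c in HL.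
  destruct (symbol_ratio_bounds c sigma (Cmod e) (IZR j) (symA w beta k j) (dotZR k w) (Cmod (Nsym w beta e k j))
              cp Hs Ho2 (Cmod_ge_0 _) HJ HL (Cmod_Nsym_sq_ge w beta e k j Hy)) as [HN H].
  split; [apply Cmod_gt_0; exact HN|exact H].
Qed.

Lemma Cmod_div_le (X N : C) (c Y K : R) : N <> RtoC 0 -> 0 <= Y ->
  Cmod X <= c * Y -> c <= K * Cmod N -> Cmod (Cdiv X N) <= K * Y.
Proof.
  intros HN HY HX Hc. assert (pN : 0 < Cmod N) by (apply Cmod_gt_0; auto).
  rewrite Cmod_div by auto. apply Rmult_le_reg_r with (Cmod N); auto.
  unfold Rdiv. rewrite Rmult_assoc, Rinv_l by lra. nra.
Qed.

Lemma Cmod_mul_div_le (X N Y : C) (K : R) : N <> RtoC 0 -> Cmod X <= K * Cmod N ->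
  Cmod (Cmult (Cdiv X N) Y) <= K * Cmod Y.
Proof.
  intros HN HX. replace (Cmult (Cdiv X N) Y) with (Cdiv (Cmult X Y) N) by (field; auto).
  apply (Cmod_div_le _ _ (K * Cmod N)); auto using Cmod_ge_0; [|lra].
  rewrite Cmod_mult. pose proof (Cmod_ge_0 Y). nra.
Qed.

Lemma Cmod_rhs_le (J2 : R) (s fv : C) : 1 <= J2 ->
  Cmod (Cplus (Cmult (RtoC (- J2)) s) fv) <= J2 * (Cmod s + Cmod fv).
Proof.
  intros HJ. eapply Rle_trans; [apply Cmod_triangle|].
  rewrite Cmod_mult, Cmod_R, Rabs_Ropp, Rabs_right by lra.
  pose proof (Cmod_ge_0 s); pose proof (Cmod_ge_0 fv). nra.
Qed.

Lemma Cmod_T_coef_le (K J2 : R) (e N s fv : C) : N <> RtoC 0 -> 1 <= J2 ->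
  Cmod e * J2 <= K * Cmod N ->
  Cmod (Cmult e (Cdiv (Cplus (Cmult (RtoC (- J2)) s) fv) N)) <= K * (Cmod s + Cmod fv).
Proof.
  intros HN HJ H. replace (Cmult e (Cdiv (Cplus (Cmult (RtoC (- J2)) s) fv) N))
    with (Cdiv (Cmult e (Cplus (Cmult (RtoC (- J2)) s) fv)) N) by (field; auto).
  pose proof (Cmod_ge_0 s); pose proof (Cmod_ge_0 fv); pose proof (Cmod_ge_0 e).
  apply (Cmod_div_le _ _ (Cmod e * J2)); auto; [lra|].
  rewrite Cmod_mult, Rmult_assoc. apply Rmult_le_compat_l; auto. apply Cmod_rhs_le; auto.
Qed.

Lemma Cmod_T_deriv_coef_le (K q J2 : R) (N0 e0 s0 fv c1 c2 : C) : N0 <> RtoC 0 -> 1 <= J2 ->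
  Rabs q <= K * Cmod N0 -> J2 <= K * Cmod N0 -> Cmod e0 * J2 <= K * Cmod N0 ->
  Cmod (Cplus (Cmult (Cdiv (Cmult Ci (RtoC q)) (Cmult N0 N0)) (Cplus (Cmult (RtoC (- J2)) s0) fv))
              (Cmult (Cdiv e0 N0) (Cmult (RtoC (- J2)) (Cplus c1 c2))))
  <= K ^ 2 * (Cmod s0 + Cmod fv) + K * (Cmod c1 + Cmod c2).
Proof.
  intros HN HJ Hq HJ0 He0.
  assert (HCq : Cmod (Cmult Ci (RtoC q)) <= K * Cmod N0) by (rewrite Cmod_mult, Cmod_Ci, Cmod_R; lra).
  replace (Cmult (Cdiv (Cmult Ci (RtoC q)) (Cmult N0 N0)) (Cplus (Cmult (RtoC (- J2)) s0) fv))
    with (Cmult (Cdiv (Cmult Ci (RtoC q)) N0) (Cdiv (Cplus (Cmult (RtoC (- J2)) s0) fv) N0)) by (field; auto).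
  replace (Cmult (Cdiv e0 N0) (Cmult (RtoC (- J2)) (Cplus c1 c2)))
    with (Cdiv (Cmult e0 (Cmult (RtoC (- J2)) (Cplus c1 c2))) N0) by (field; auto).
  pose proof (Cmod_ge_0 s0); pose proof (Cmod_ge_0 fv); pose proof (Cmod_ge_0 c1); pose proof (Cmod_ge_0 c2).
  pose proof (Cmod_ge_0 e0). assert (0 <= K) by (pose proof (Cmod_ge_0 N0); pose proof (Cmod_gt_0 N0); nra).
  eapply Rle_trans; [apply Cmod_triangle|]. apply Rplus_le_compat.
  - eapply Rle_trans; [apply Cmod_mul_div_le; eauto|].
    replace (K ^ 2 * (Cmod s0 + Cmod fv)) with (K * (K * (Cmod s0 + Cmod fv))) by ring.
    apply Rmult_le_compat_l; auto. apply (Cmod_div_le _ _ J2); auto; [lra|]. apply Cmod_rhs_le; auto.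
  - apply (Cmod_div_le _ _ (Cmod e0 * J2)); auto; [lra|].
    rewrite !Cmod_mult, Cmod_R, Rabs_Ropp, Rabs_right by lra.
    rewrite <- Rmult_assoc. apply Rmult_le_compat_l; [nra|]. apply Cmod_triangle.
Qed.

Section DiffQuotient.

Variables (A q J2 : R) (e e0 se s0 fv c1 c2 : C).

Let Ne := Cplus (Cmult (Copp e) (RtoC A)) (Cmult Ci (RtoC q)).
Let N0 := Cplus (Cmult (Copp e0) (RtoC A)) (Cmult Ci (RtoC q)).
Let h := Cminus e e0.
Let rhs (s : C) := Cplus (Cmult (RtoC (- J2)) s) fv.
Let E := Cminus (Cminus (Cdiv (Cminus se s0) h) c1) c2.

(* [e N0 - e0 Ne = i q h]: the difference quotient of [e / N e] is exactly [i q / (Ne N0)] *)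
Lemma diff_quotient_identity : Ne <> RtoC 0 -> N0 <> RtoC 0 -> h <> RtoC 0 ->
  Cminus (Cdiv (Cminus (Cmult e (Cdiv (rhs se) Ne)) (Cmult e0 (Cdiv (rhs s0) N0))) h)
         (Cplus (Cmult (Cdiv (Cmult Ci (RtoC q)) (Cmult N0 N0)) (rhs s0))
                (Cmult (Cdiv e0 N0) (Cmult (RtoC (- J2)) (Cplus c1 c2))))
  = Cplus (Cplus (Cmult (Cdiv (Cmult Ci (RtoC q)) N0) (Cmult (Cdiv (RtoC A) N0) (Cmult h (Cdiv (rhs se) Ne))))
                 (Cmult (Cdiv (Cmult Ci (RtoC q)) N0)
                        (Cmult (Cdiv (RtoC (- J2)) N0) (Cmult h (Cplus (Cplus E c1) c2)))))
          (Cmult (Cdiv (Cmult e0 (RtoC (- J2))) N0) E).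
Proof. intros. unfold E, rhs, h, Ne, N0 in *. field. auto. Qed.

Lemma Cmod_diff_quotient_le (K : R) : Ne <> RtoC 0 -> N0 <> RtoC 0 -> 1 <= J2 ->
  Rabs q <= K * Cmod N0 -> Rabs A <= K * Cmod N0 -> J2 <= K * Cmod Ne -> J2 <= K * Cmod N0 ->
  Cmod e0 * J2 <= K * Cmod N0 ->
  Cmod (Cplus (Cplus (Cmult (Cdiv (Cmult Ci (RtoC q)) N0) (Cmult (Cdiv (RtoC A) N0) (Cmult h (Cdiv (rhs se) Ne))))
                     (Cmult (Cdiv (Cmult Ci (RtoC q)) N0)
                            (Cmult (Cdiv (RtoC (- J2)) N0) (Cmult h (Cplus (Cplus E c1) c2)))))
              (Cmult (Cdiv (Cmult e0 (RtoC (- J2))) N0) E))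
  <= Cmod h * K ^ 3 * (Cmod se + Cmod fv) + K ^ 2 * Cmod h * (Cmod E + Cmod c1 + Cmod c2) + K * Cmod E.
Proof.
  intros HNe HN0 HJ Hq HA HJe HJ0 He0.
  assert (HK : 0 <= K) by (pose proof (Cmod_ge_0 N0); pose proof (Rabs_pos q); apply Cmod_gt_0 in HN0; nra).
  assert (HCq : Cmod (Cmult Ci (RtoC q)) <= K * Cmod N0) by (rewrite Cmod_mult, Cmod_Ci, Cmod_R; lra).
  assert (HCA : Cmod (RtoC A) <= K * Cmod N0) by (rewrite Cmod_R; lra).
  assert (HCJ : Cmod (RtoC (- J2)) <= K * Cmod N0) by (rewrite Cmod_R, Rabs_Ropp, Rabs_right; lra).
  assert (HCe0 : Cmod (Cmult e0 (RtoC (- J2))) <= K * Cmod N0)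
    by (rewrite Cmod_mult, Cmod_R, Rabs_Ropp, Rabs_right; lra).
  assert (Hrhs : Cmod (Cdiv (rhs se) Ne) <= K * (Cmod se + Cmod fv)).
  { apply (Cmod_div_le _ _ J2); auto; [pose proof (Cmod_ge_0 se); pose proof (Cmod_ge_0 fv); lra|].
    apply Cmod_rhs_le; auto. }
  assert (HEc : Cmod (Cplus (Cplus E c1) c2) <= Cmod E + Cmod c1 + Cmod c2)
    by (pose proof (Cmod_triangle (Cplus E c1) c2); pose proof (Cmod_triangle E c1); lra).
  pose proof (Cmod_ge_0 h).
  eapply Rle_trans; [apply Cmod_triangle|]. apply Rplus_le_compat; [|apply Cmod_mul_div_le; auto].
  eapply Rle_trans; [apply Cmod_triangle|]. apply Rplus_le_compat.
  - eapply Rle_trans; [apply Cmod_mul_div_le; eauto|].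
    eapply Rle_trans; [apply Rmult_le_compat_l; [auto|apply Cmod_mul_div_le; eauto]|].
    rewrite Cmod_mult. pose proof (Cmod_ge_0 (Cdiv (rhs se) Ne)).
    assert (Cmod h * Cmod (Cdiv (rhs se) Ne) <= Cmod h * (K * (Cmod se + Cmod fv)))
      by (apply Rmult_le_compat_l; auto).
    assert (0 <= K * K) by nra. replace (Cmod h * K ^ 3 * (Cmod se + Cmod fv))
      with (K * K * (Cmod h * (K * (Cmod se + Cmod fv)))) by ring. nra.
  - eapply Rle_trans; [apply Cmod_mul_div_le; eauto|].
    eapply Rle_trans; [apply Rmult_le_compat_l; [auto|apply Cmod_mul_div_le; eauto]|].
    rewrite Cmod_mult. pose proof (Cmod_ge_0 (Cplus (Cplus E c1) c2)).
    assert (Cmod h * Cmod (Cplus (Cplus E c1) c2) <= Cmod h * (Cmod E + Cmod c1 + Cmod c2))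
      by (apply Rmult_le_compat_l; auto).
    assert (0 <= K * K) by nra. replace (K ^ 2 * Cmod h * (Cmod E + Cmod c1 + Cmod c2))
      with (K * K * (Cmod h * (Cmod E + Cmod c1 + Cmod c2))) by ring. nra.
Qed.

End DiffQuotient.

(* the derivative of [e |-> T_e (U e)] at [e0], with [U1 = U'(e0)]; note [d/de (e / N_e) = i (k.w) / N_e^2] *)
Definition T_deriv (d : nat) (w : list R) (beta : R) (f : Coef) (e0 : C) (U0 U1 : Coef) : Coef :=
  fun k j =>
    if Z.eqb j 0 then RtoC 0
    else Cplus (Cmult (Cdiv (Cmult Ci (RtoC (dotZR k w))) (Cmult (Nsym w beta e0 k j) (Nsym w beta e0 k j)))
                      (Cplus (Cmult (RtoC (- IZR j ^ 2)) (sqU d U0 k j)) (f k j)))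
               (Cmult (Cdiv e0 (Nsym w beta e0 k j))
                      (Cmult (RtoC (- IZR j ^ 2)) (Cplus (conv d U1 U0 k j) (conv d U0 U1 k j)))).

Definition sq_remainder (d : nat) (Ue U0 U1 : Coef) (h : C) : Coef := fun k j =>
  Cminus (Cminus (Cdiv (Cminus (sqU d Ue k j) (sqU d U0 k j)) h) (conv d U1 U0 k j)) (conv d U0 U1 k j).

Lemma sq_remainder_decomp d rho m (Ue U0 U1 : Coef) (h : C) k j S1 S0 S2 SR SD :
  0 <= rho -> INR d + 1 <= m -> length k = d -> h <> RtoC 0 ->
  sq_wnorm_le d rho m (cabs Ue) S1 -> sq_wnorm_le d rho m (cabs U0) S0 -> sq_wnorm_le d rho m (cabs U1) S2 ->
  sq_wnorm_le d rho m (cabs (fun k j => Cminus (Cdiv (Cminus (Ue k j) (U0 k j)) h) (U1 k j))) SR ->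
  sq_wnorm_le d rho m (cabs (fun k j => Cminus (Ue k j) (U0 k j))) SD ->
  sq_remainder d Ue U0 U1 h k j
  = Cplus (Cplus (conv d (fun k j => Cminus (Cdiv (Cminus (Ue k j) (U0 k j)) h) (U1 k j)) Ue k j)
                 (conv d U1 (fun k j => Cminus (Ue k j) (U0 k j)) k j))
          (conv d U0 (fun k j => Cminus (Cdiv (Cminus (Ue k j) (U0 k j)) h) (U1 k j)) k j).
Proof.
  intros Hr Hm Hk Hh B1 B0 B2 BR BD.
  set (R := fun k j => Cminus (Cdiv (Cminus (Ue k j) (U0 k j)) h) (U1 k j)) in *.
  set (De := fun k j => Cminus (Ue k j) (U0 k j)) in *.
  assert (Hn : length (fst (k, j)) = d) by auto.
  pose proof (has_sumC_conv d rho m Hr Hm Ue Ue _ _ (k, j) Hn B1 B1) as H1.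
  pose proof (has_sumC_conv d rho m Hr Hm U0 U0 _ _ (k, j) Hn B0 B0) as H2.
  pose proof (has_sumC_conv d rho m Hr Hm U1 U0 _ _ (k, j) Hn B2 B0) as H3.
  pose proof (has_sumC_conv d rho m Hr Hm U0 U1 _ _ (k, j) Hn B0 B2) as H4.
  pose proof (has_sumC_conv d rho m Hr Hm R Ue _ _ (k, j) Hn BR B1) as H5.
  pose proof (has_sumC_conv d rho m Hr Hm U1 De _ _ (k, j) Hn B2 BD) as H6.
  pose proof (has_sumC_conv d rho m Hr Hm U0 R _ _ (k, j) Hn B0 BR) as H7.
  simpl in H1, H2, H3, H4, H5, H6, H7.
  set (m1 := RtoC (-1)).
  assert (L := has_sumC_add _ _ _ _ _
     (has_sumC_add _ _ _ _ _ (has_sumC_scal _ _ _ (/ h) (has_sumC_add _ _ _ _ _ H1 (has_sumC_scal _ _ _ m1 H2)))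
                             (has_sumC_scal _ _ _ m1 H3))
     (has_sumC_scal _ _ _ m1 H4)).
  assert (Rr := has_sumC_add _ _ _ _ _ (has_sumC_add _ _ _ _ _ H5 H6) H7).
  (* both sides are sums of the same family, by bilinearity *)
  eapply (has_sumC_unique d); [|exact Rr].
  replace (sq_remainder d Ue U0 U1 h k j) with
    (Cplus (Cplus (Cmult (/ h) (Cplus (conv d Ue Ue k j) (Cmult m1 (conv d U0 U0 k j))))
                  (Cmult m1 (conv d U1 U0 k j))) (Cmult m1 (conv d U0 U1 k j)))
    by (unfold sq_remainder, sqU, m1; fold (conv d Ue Ue k j) (conv d U0 U0 k j); field; auto).
  eapply has_sumC_ext; [|exact L]. intros x. unfold conv_term, R, De, m1. simpl. field. auto.
Qed.

Lemma sq_wnorm_le_sq_remainder d rho m (Ue U0 U1 : Coef) (h : C) S S0 S1 SR SD :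
  0 <= rho -> INR d + 1 <= m -> h <> RtoC 0 ->
  sq_wnorm_le d rho m (cabs Ue) S -> sq_wnorm_le d rho m (cabs U0) S0 -> sq_wnorm_le d rho m (cabs U1) S1 ->
  sq_wnorm_le d rho m (cabs (fun k j => Cminus (Cdiv (Cminus (Ue k j) (U0 k j)) h) (U1 k j))) SR ->
  sq_wnorm_le d rho m (cabs (fun k j => Cminus (Ue k j) (U0 k j))) SD ->
  sq_wnorm_le d rho m (cabs (sq_remainder d Ue U0 U1 h))
    (2 * (2 * (conv_const d m * SR * S) + 2 * (conv_const d m * S1 * SD)) + 2 * (conv_const d m * S0 * SR)).
Proof.
  intros Hrho Hm Hh B B0 B1 BR BD. assert (Hm0 : 0 <= m) by (pose proof (pos_INR d); lra).
  set (R := fun k j => Cminus (Cdiv (Cminus (Ue k j) (U0 k j)) h) (U1 k j)) in *.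
  set (De := fun k j => Cminus (Ue k j) (U0 k j)) in *.
  apply (sq_wnorm_le_dom _ _ _ _ (fun n => cabs (conv d R Ue) n + cabs (conv d U1 De) n + cabs (conv d U0 R) n));
    auto.
  - intros [k j] Hk. split; [apply cabs_ge0|]. unfold cabs at 1; cbn [fst snd] in *.
    rewrite (sq_remainder_decomp d rho m Ue U0 U1 h k j S S0 S1 SR SD); auto.
    eapply Rle_trans; [apply Cmod_triangle|]. apply Rplus_le_compat_r, Cmod_triangle.
  - apply sq_wnorm_le_add; auto; [apply sq_wnorm_le_add; auto|]; apply sq_wnorm_le_conv; auto.
Qed.

Section Increments.

Variables (d : nat) (rho m : R) (Ue U0 U1 : Coef) (h : C).
Hypotheses (Hrho : 0 <= rho) (Hm0 : 0 <= m) (Hh : h <> RtoC 0).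

Let R := fun k j => Cminus (Cdiv (Cminus (Ue k j) (U0 k j)) h) (U1 k j).
Let De := fun k j => Cminus (Ue k j) (U0 k j).

Lemma in_H_diff_quotient_remainder : in_H d rho m Ue -> in_H d rho m U0 -> in_H d rho m U1 -> in_H d rho m R.
Proof.
  intros He H0 H1.
  destruct (sq_wnorm_le_sqnorm _ _ _ _ He) as [Be _].
  destruct (sq_wnorm_le_sqnorm _ _ _ _ H0) as [B0 _].
  destruct (sq_wnorm_le_sqnorm _ _ _ _ H1) as [B1 _].
  assert (hh : 0 < Cmod h) by (apply Cmod_gt_0; auto).
  eapply in_H_of_sq_wnorm_le.
  - intros k Hk. unfold R. rewrite (proj1 He k Hk), (proj1 H0 k Hk), (proj1 H1 k Hk). field. auto.
  - apply (sq_wnorm_le_dom _ _ _ _ (fun n => / Cmod h * (cabs Ue n + cabs U0 n) + cabs U1 n)); auto.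
    + intros [k j] _. split; [apply cabs_ge0|]. unfold R, cabs; cbn [fst snd].
      eapply Rle_trans; [apply Cmod_minus_le|]. apply Rplus_le_compat_r.
      unfold Cdiv. rewrite Cmod_mult, Cmod_inv, Rmult_comm by auto.
      apply Rmult_le_compat_l; [left; apply Rinv_0_lt_compat; auto|apply Cmod_minus_le].
    + apply sq_wnorm_le_add; [auto|auto| |exact B1]. apply sq_wnorm_le_scal, sq_wnorm_le_add; auto.
      * exact Be.
      * exact B0.
Qed.

Lemma sq_wnorm_le_increment r S1 : sq_wnorm_le d rho m (cabs R) r -> sq_wnorm_le d rho m (cabs U1) S1 ->
  sq_wnorm_le d rho m (cabs De) (Cmod h ^ 2 * (2 * r + 2 * S1)).
Proof.
  intros BR B1. apply (sq_wnorm_le_dom _ _ _ _ (fun n => Cmod h * (cabs R n + cabs U1 n))); auto.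
  - intros [k j] _. split; [apply cabs_ge0|]. unfold cabs; cbn [fst snd].
    replace (De k j) with (Cmult h (Cplus (R k j) (U1 k j))) by (unfold De, R; field; auto).
    rewrite Cmod_mult. apply Rmult_le_compat_l; [apply Cmod_ge_0|apply Cmod_triangle].
  - apply sq_wnorm_le_scal, sq_wnorm_le_add; auto.
Qed.

Lemma sq_wnorm_le_of_increment S0 SD : sq_wnorm_le d rho m (cabs U0) S0 -> sq_wnorm_le d rho m (cabs De) SD ->
  sq_wnorm_le d rho m (cabs Ue) (2 * S0 + 2 * SD).
Proof.
  intros B0 BD. apply (sq_wnorm_le_dom _ _ _ _ (fun n => cabs U0 n + cabs De n)); auto.
  - intros [k j] _. split; [apply cabs_ge0|]. unfold De, cabs; cbn [fst snd].
    replace (Ue k j) with (Cplus (U0 k j) (Cminus (Ue k j) (U0 k j))) at 1 by ring. apply Cmod_triangle.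
  - apply sq_wnorm_le_add; auto.
Qed.

End Increments.

Lemma sq_remainder_le d rho m U0 U1 S0 S1 : 0 <= rho -> INR d + 1 <= m ->
  sq_wnorm_le d rho m (cabs U0) S0 -> sq_wnorm_le d rho m (cabs U1) S1 ->
  exists C, 0 <= C /\ forall Ue h r, h <> RtoC 0 -> Cmod h <= 1 -> 0 <= r <= 1 ->
    sq_wnorm_le d rho m (cabs (fun k j => Cminus (Cdiv (Cminus (Ue k j) (U0 k j)) h) (U1 k j))) r ->
    sq_wnorm_le d rho m (cabs Ue) C /\
    sq_wnorm_le d rho m (cabs (sq_remainder d Ue U0 U1 h)) (C * (r + Cmod h ^ 2)).
Proof.
  intros Hrho Hm B0 B1. assert (Hm0 : 0 <= m) by (pose proof (pos_INR d); lra).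
  pose proof (sq_wnorm_le_ge0 _ _ _ _ _ B0) as S00. pose proof (sq_wnorm_le_ge0 _ _ _ _ _ B1) as S10.
  set (Kc := conv_const d m). pose proof (conv_const_ge0 d m) as Kc0. fold Kc in Kc0.
  set (C1 := 2 + 2 * S1). set (C2 := 2 * S0 + 2 * C1).
  set (CE := 4 * Kc * C2 + 4 * Kc * S1 * C1 + 2 * Kc * S0).
  assert (C20 : 0 <= C2) by (unfold C2, C1; lra).
  assert (CE0 : 0 <= CE) by (unfold CE, C1; pose proof (Rmult_le_pos _ _ Kc0 C20);
                             pose proof (Rmult_le_pos _ _ Kc0 S00); pose proof (Rmult_le_pos _ _ Kc0 S10); nra).
  exists (C2 + CE). split; [lra|]. intros Ue h r Hh Hh1 [r0 r1] BR.
  set (hh := Cmod h). pose proof (Cmod_ge_0 h). fold hh in H, Hh1.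
  assert (hh2 : hh ^ 2 <= 1) by nra. assert (hh20 : 0 <= hh ^ 2) by nra.
  assert (BD : sq_wnorm_le d rho m (cabs (fun k j => Cminus (Ue k j) (U0 k j))) (hh ^ 2 * C1)).
  { eapply sq_wnorm_le_weaken; [exact (sq_wnorm_le_increment d rho m Ue U0 U1 h Hrho Hm0 Hh r S1 BR B1)|].
    apply Rmult_le_compat_l; auto. unfold C1; lra. }
  assert (BUe : sq_wnorm_le d rho m (cabs Ue) C2).
  { eapply sq_wnorm_le_weaken; [exact (sq_wnorm_le_of_increment d rho m Ue U0 Hrho Hm0 S0 _ B0 BD)|].
    unfold C2. assert (hh ^ 2 * C1 <= C1) by (unfold C1; nra). lra. }
  split; [eapply sq_wnorm_le_weaken; eauto; lra|].
  eapply sq_wnorm_le_weaken;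
    [exact (sq_wnorm_le_sq_remainder d rho m Ue U0 U1 h C2 S0 S1 r _ Hrho Hm Hh BUe B0 B1 BR BD)|].
  fold Kc. assert (a : 0 <= Kc * C2) by (apply Rmult_le_pos; auto).
  assert (b : 0 <= Kc * S1 * C1) by (unfold C1; apply Rmult_le_pos; nra).
  assert (c : 0 <= Kc * S0) by (apply Rmult_le_pos; auto).
  assert (CE * (r + hh ^ 2) <= (C2 + CE) * (r + hh ^ 2)) by nra.
  replace (2 * (2 * (Kc * r * C2) + 2 * (Kc * S1 * (hh ^ 2 * C1))) + 2 * (Kc * S0 * r))
    with (4 * (Kc * C2) * r + 4 * (Kc * S1 * C1) * hh ^ 2 + 2 * (Kc * S0) * r) by ring.
  unfold CE. nra.
Qed.

Section TOperator.

Variables (d : nat) (w : list R) (rho m beta : R) (f : Coef) (D : C -> Prop) (K : R).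
Hypotheses (Hrho : 0 <= rho) (Hm : INR d + 1 <= m) (HK : 0 < K) (HD : symbol_bounds D w beta K)
  (Hf : in_H d rho m f).

Let Hm0 : 0 <= m.
Proof. pose proof (pos_INR d); lra. Qed.

Lemma T_op_coef_le e U k j : D e ->
  Cmod (T_op d w beta f e U k j) <= K * (cabs (sqU d U) (k, j) + cabs f (k, j)).
Proof.
  intros He. unfold T_op, cabs; cbn [fst snd].
  destruct (Z.eqb_spec j 0) as [->|Hj].
  - rewrite Cmod_0. pose proof (Cmod_ge_0 (sqU d U k 0%Z)). pose proof (Cmod_ge_0 (f k 0%Z)). nra.
  - destruct (HD e k j He Hj) as [HN [H1 _]]. apply Cmod_T_coef_le; auto using IZR_sq_ge1.
Qed.

Lemma sq_wnorm_le_T_op e U S Sf : D e ->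
  sq_wnorm_le d rho m (cabs f) Sf -> sq_wnorm_le d rho m (cabs U) S ->
  sq_wnorm_le d rho m (cabs (T_op d w beta f e U)) (K ^ 2 * (2 * (conv_const d m * S * S) + 2 * Sf)).
Proof.
  intros He Bf BU.
  apply (sq_wnorm_le_dom _ _ _ _ (fun n => K * (cabs (sqU d U) n + cabs f n))); auto.
  - intros [k j] _. split; [apply cabs_ge0|]. apply T_op_coef_le; auto.
  - apply sq_wnorm_le_scal, sq_wnorm_le_add; auto. apply sq_wnorm_le_conv; auto.
Qed.

Lemma in_H_T_op e U : D e -> in_H d rho m U -> in_H d rho m (T_op d w beta f e U).
Proof.
  intros He HU. destruct (sq_wnorm_le_sqnorm _ _ _ _ Hf) as [Bf _].
  destruct (sq_wnorm_le_sqnorm _ _ _ _ HU) as [BU _].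
  eapply in_H_of_sq_wnorm_le; [reflexivity|]. eapply sq_wnorm_le_T_op; eauto.
Qed.

Lemma T_deriv_coef_le e0 U0 U1 k j : D e0 ->
  Cmod (T_deriv d w beta f e0 U0 U1 k j)
  <= K ^ 2 * (cabs (sqU d U0) (k, j) + cabs f (k, j)) + K * (cabs (conv d U1 U0) (k, j) + cabs (conv d U0 U1) (k, j)).
Proof.
  intros He. unfold T_deriv, cabs; cbn [fst snd].
  destruct (Z.eqb_spec j 0) as [->|Hj].
  - rewrite Cmod_0. pose proof (Cmod_ge_0 (sqU d U0 k 0%Z)). pose proof (Cmod_ge_0 (f k 0%Z)).
    pose proof (Cmod_ge_0 (conv d U1 U0 k 0%Z)). pose proof (Cmod_ge_0 (conv d U0 U1 k 0%Z)). nra.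
  - destruct (HD e0 k j He Hj) as [HN [H1 [H2 [H3 _]]]]. apply Cmod_T_deriv_coef_le; auto using IZR_sq_ge1.
Qed.

Lemma in_H_T_deriv e0 U0 U1 : D e0 -> in_H d rho m U0 -> in_H d rho m U1 ->
  in_H d rho m (T_deriv d w beta f e0 U0 U1).
Proof.
  intros He H0 H1.
  destruct (sq_wnorm_le_sqnorm _ _ _ _ Hf) as [Bf _].
  destruct (sq_wnorm_le_sqnorm _ _ _ _ H0) as [B0 _].
  destruct (sq_wnorm_le_sqnorm _ _ _ _ H1) as [B1 _].
  eapply in_H_of_sq_wnorm_le; [reflexivity|].
  apply (sq_wnorm_le_dom _ _ _ _ (fun n => K ^ 2 * (cabs (sqU d U0) n + cabs f n)
                                        + K * (cabs (conv d U1 U0) n + cabs (conv d U0 U1) n))); auto.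
  - intros [k j] _. split; [apply cabs_ge0|]. apply T_deriv_coef_le; auto.
  - pose proof (sq_wnorm_le_conv d rho m Hrho Hm _ _ _ _ B0 B0).
    pose proof (sq_wnorm_le_conv d rho m Hrho Hm _ _ _ _ B1 B0).
    pose proof (sq_wnorm_le_conv d rho m Hrho Hm _ _ _ _ B0 B1).
    apply sq_wnorm_le_add; auto; apply sq_wnorm_le_scal, sq_wnorm_le_add; eauto.
Qed.

Lemma T_diff_quotient_coef_le e e0 Ue U0 U1 k j : D e -> D e0 -> Cminus e e0 <> RtoC 0 ->
  Cmod (Cminus (Cdiv (Cminus (T_op d w beta f e Ue k j) (T_op d w beta f e0 U0 k j)) (Cminus e e0))
               (T_deriv d w beta f e0 U0 U1 k j))
  <= Cmod (Cminus e e0) * K ^ 3 * (cabs (sqU d Ue) (k, j) + cabs f (k, j))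
     + K ^ 2 * Cmod (Cminus e e0) * (cabs (sq_remainder d Ue U0 U1 (Cminus e e0)) (k, j)
                                     + cabs (conv d U1 U0) (k, j) + cabs (conv d U0 U1) (k, j))
     + K * cabs (sq_remainder d Ue U0 U1 (Cminus e e0)) (k, j).
Proof.
  intros He He0 Hh. unfold T_op, T_deriv, sq_remainder, cabs; cbn [fst snd].
  destruct (Z.eqb_spec j 0) as [->|Hj].
  - replace (Cminus (Cdiv (Cminus (RtoC 0) (RtoC 0)) (Cminus e e0)) (RtoC 0)) with (RtoC 0) by (field; auto).
    rewrite Cmod_0. pose proof (pow_le K 3 ltac:(lra)). pose proof (pow_le K 2 ltac:(lra)).
    repeat match goal with |- context [Cmod ?x] =>
      lazymatch goal with _ : 0 <= Cmod x |- _ => fail | _ => pose proof (Cmod_ge_0 x) end end.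
    apply Rplus_le_le_0_compat; [apply Rplus_le_le_0_compat|]; repeat apply Rmult_le_pos; try lra;
      repeat apply Rplus_le_le_0_compat; auto.
  - destruct (HD e k j He Hj) as [HN [_ [H2 _]]].
    destruct (HD e0 k j He0 Hj) as [HN0 [H01 [H02 [H03 H04]]]].
    rewrite (Nsym_eq w beta e k j) in *. rewrite (Nsym_eq w beta e0 k j) in *.
    rewrite diff_quotient_identity by auto.
    apply Cmod_diff_quotient_le; auto using IZR_sq_ge1.
Qed.


Lemma sq_wnorm_le_T_diff_quotient e e0 Ue U0 U1 Sf C3 Cc SE : D e -> D e0 -> Cminus e e0 <> RtoC 0 ->
  sq_wnorm_le d rho m (cabs f) Sf -> sq_wnorm_le d rho m (cabs (sqU d Ue)) C3 ->
  sq_wnorm_le d rho m (cabs (conv d U1 U0)) Cc -> sq_wnorm_le d rho m (cabs (conv d U0 U1)) Cc ->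
  sq_wnorm_le d rho m (cabs (sq_remainder d Ue U0 U1 (Cminus e e0))) SE ->
  sq_wnorm_le d rho m
    (cabs (fun k j => Cminus (Cdiv (Cminus (T_op d w beta f e Ue k j) (T_op d w beta f e0 U0 k j)) (Cminus e e0))
                             (T_deriv d w beta f e0 U0 U1 k j)))
    (Cmod (Cminus e e0) ^ 2 * (4 * K ^ 6 * (2 * C3 + 2 * Sf) + 4 * K ^ 4 * (4 * SE + 6 * Cc)) + 2 * K ^ 2 * SE).
Proof.
  intros He He0 Hh Bf Bsq Bc1 Bc2 BE. set (h := Cminus e e0) in *.
  eapply sq_wnorm_le_weaken.
  - apply (sq_wnorm_le_dom _ _ _ _ (fun n => Cmod h * K ^ 3 * (cabs (sqU d Ue) n + cabs f n)
          + K ^ 2 * Cmod h * (cabs (sq_remainder d Ue U0 U1 h) n + cabs (conv d U1 U0) n + cabs (conv d U0 U1) n)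
          + K * cabs (sq_remainder d Ue U0 U1 h) n)); auto.
    + intros [k j] _. split; [apply cabs_ge0|]. apply T_diff_quotient_coef_le; auto.
    + apply sq_wnorm_le_add; auto; [apply sq_wnorm_le_add; auto|apply sq_wnorm_le_scal; eauto].
      * apply sq_wnorm_le_scal, sq_wnorm_le_add; eauto.
      * apply sq_wnorm_le_scal, sq_wnorm_le_add; auto; [apply sq_wnorm_le_add|]; eauto.
  - right; ring.
Qed.

Lemma T_diff_quotient_remainder_le e0 U0 U1 : D e0 -> in_H d rho m U0 -> in_H d rho m U1 ->
  exists C, 0 < C /\ forall e Ue r, D e -> Cminus e e0 <> RtoC 0 -> Cmod (Cminus e e0) <= 1 -> 0 <= r <= 1 ->
    sq_wnorm_le d rho m (cabs (fun k j => Cminus (Cdiv (Cminus (Ue k j) (U0 k j)) (Cminus e e0)) (U1 k j))) r ->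
    sq_wnorm_le d rho m
      (cabs (fun k j => Cminus (Cdiv (Cminus (T_op d w beta f e Ue k j) (T_op d w beta f e0 U0 k j)) (Cminus e e0))
                               (T_deriv d w beta f e0 U0 U1 k j)))
      (C * (r + Cmod (Cminus e e0) ^ 2)).
Proof.
  intros He0 H0 H1.
  destruct (sq_wnorm_le_sqnorm _ _ _ _ Hf) as [Bf Sf0]. set (Sf := real (sqnorm d rho m f)) in *.
  destruct (sq_wnorm_le_sqnorm _ _ _ _ H0) as [B0 S00]. set (S0 := real (sqnorm d rho m U0)) in *.
  destruct (sq_wnorm_le_sqnorm _ _ _ _ H1) as [B1 S10]. set (S1 := real (sqnorm d rho m U1)) in *.
  destruct (sq_remainder_le d rho m U0 U1 S0 S1 Hrho Hm B0 B1) as [C [C0 HC]].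
  set (Kc := conv_const d m). pose proof (conv_const_ge0 d m) as Kc0. fold Kc in Kc0.
  set (C3 := Kc * C * C). set (Cc := Kc * S1 * S0).
  assert (C30 : 0 <= C3) by (unfold C3; apply Rmult_le_pos; [apply Rmult_le_pos|]; lra).
  assert (Cc0 : 0 <= Cc) by (unfold Cc; apply Rmult_le_pos; [apply Rmult_le_pos|]; lra).
  assert (K2 : 0 <= K ^ 2) by (apply pow_le; lra). assert (K4 : 0 <= K ^ 4) by (apply pow_le; lra).
  assert (K6 : 0 <= K ^ 6) by (apply pow_le; lra).
  exists (4 * K ^ 6 * (2 * C3 + 2 * Sf) + 4 * K ^ 4 * (8 * C + 6 * Cc) + 2 * K ^ 2 * C + 1).
  split; [nra|]. intros e Ue r He Hh Hh1 Hr BR.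
  destruct (HC Ue _ r Hh Hh1 Hr BR) as [BUe BE].
  destruct Hr as [r0 r1]. pose proof (Cmod_ge_0 (Cminus e e0)).
  set (hh := Cmod (Cminus e e0)) in *. set (P := r + hh ^ 2) in *.
  assert (hhP : hh ^ 2 <= P) by (unfold P; lra). assert (P2 : P <= 2) by (unfold P; nra).
  eapply sq_wnorm_le_weaken.
  - apply (sq_wnorm_le_T_diff_quotient e e0 Ue U0 U1 Sf C3 Cc (C * P)); auto.
    + exact (sq_wnorm_le_conv d rho m Hrho Hm _ _ _ _ BUe BUe).
    + exact (sq_wnorm_le_conv d rho m Hrho Hm _ _ _ _ B1 B0).
    + eapply sq_wnorm_le_weaken; [exact (sq_wnorm_le_conv d rho m Hrho Hm _ _ _ _ B0 B1)|].
      right; unfold Cc, Kc; ring.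
  - fold hh. assert (P0 : 0 <= P) by (unfold P; nra).
    set (a := 4 * K ^ 6 * (2 * C3 + 2 * Sf)). assert (a0 : 0 <= a) by (unfold a; apply Rmult_le_pos; lra).
    assert (CP : 0 <= C * P <= 2 * C) by (split; nra).
    assert (X : 0 <= a + 4 * K ^ 4 * (4 * (C * P) + 6 * Cc) <= a + 4 * K ^ 4 * (8 * C + 6 * Cc)).
    { split; [apply Rplus_le_le_0_compat, Rmult_le_pos|apply Rplus_le_compat_l, Rmult_le_compat_l]; lra. }
    assert (hh ^ 2 * (a + 4 * K ^ 4 * (4 * (C * P) + 6 * Cc)) <= P * (a + 4 * K ^ 4 * (8 * C + 6 * Cc)))
      by (apply Rmult_le_compat; try lra; nra).
    nra.
Qed.

Lemma T_op_bounded U M : (forall e, D e -> in_H d rho m (U e)) -> (forall e, D e -> Hnorm d rho m (U e) <= M) ->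
  exists M', forall e, D e -> Hnorm d rho m (T_op d w beta f e (U e)) <= M'.
Proof.
  intros HU HM. destruct (sq_wnorm_le_sqnorm _ _ _ _ Hf) as [Bf Sf0].
  exists (sqrt (K ^ 2 * (2 * (conv_const d m * M ^ 2 * M ^ 2)) + K ^ 2 * (2 * real (sqnorm d rho m f)))).
  intros e He. apply Hnorm_le_of_sq_wnorm_le.
  destruct (sq_wnorm_le_sqnorm _ _ _ _ (HU e He)) as [BU SU].
  pose proof (sqnorm_le_of_Hnorm_le _ _ _ _ _ (HU e He) (HM e He)) as SM.
  set (S := real (sqnorm d rho m (U e))) in *.
  eapply sq_wnorm_le_weaken; [exact (sq_wnorm_le_T_op e (U e) _ _ He Bf BU)|].
  pose proof (conv_const_ge0 d m). assert (0 <= K ^ 2) by (apply pow_le; lra).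
  assert (S * S <= M ^ 2 * M ^ 2) by (apply Rmult_le_compat; auto).
  assert (conv_const d m * S * S <= conv_const d m * M ^ 2 * M ^ 2)
    by (rewrite !Rmult_assoc; apply Rmult_le_compat_l; auto).
  nra.
Qed.

Lemma sqrt_lin_lt C r x t eta : 0 < C -> 0 <= r < t ^ 2 -> 0 <= x < t -> t * (2 * C + 1) <= eta ->
  sqrt (C * (r + x ^ 2)) < eta.
Proof.
  intros HC [r0 rt] [x0 xt] Ht.
  assert (0 < t) by lra. assert (x ^ 2 < t ^ 2) by nra.
  assert (C * (r + x ^ 2) < (t * (2 * C + 1)) ^ 2) by nra.
  rewrite <- (sqrt_pow2 eta) by nra. apply sqrt_lt_1_alt. split; [nra|].
  apply Rlt_le_trans with ((t * (2 * C + 1)) ^ 2); auto. apply pow_incr; nra.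
Qed.

Lemma analytic_on_T_op U : analytic_on d rho m D U -> analytic_on d rho m D (fun e => T_op d w beta f e (U e)).
Proof.
  intros [UH UD]. split; [intros e He; apply in_H_T_op; auto|].
  intros e0 He0. destruct (UD e0 He0) as [U1 [HU1 Hcd]].
  destruct (T_diff_quotient_remainder_le e0 (U e0) U1 He0 (UH e0 He0) HU1) as [C [C0 HC]].
  exists (T_deriv d w beta f e0 (U e0) U1). split; [apply in_H_T_deriv; auto|].
  intros eta Heta.
  set (t := Rmin 1 (eta / (2 * C + 1))).
  assert (Ht0 : 0 < t) by (apply Rmin_glb_lt; [lra|apply Rdiv_lt_0_compat; lra]).
  assert (Ht1 : t <= 1) by apply Rmin_l.
  assert (Hte : t * (2 * C + 1) <= eta).
  { pose proof (Rmin_r 1 (eta / (2 * C + 1))). fold t in H.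
    apply Rmult_le_compat_r with (r := 2 * C + 1) in H; [|lra]. field_simplify in H; lra. }
  destruct (Hcd t Ht0) as [dl [Hdl Hd]].
  exists (Rmin dl t). split; [apply Rmin_glb_lt; auto|].
  intros e He [Hh0 Hh1].
  pose proof (Rmin_l dl t). pose proof (Rmin_r dl t).
  assert (Hh : Cminus e e0 <> RtoC 0) by (apply Cmod_gt_0; auto).
  assert (Hhd : Cmod (Cminus e e0) < dl) by lra.
  assert (HR := Hd e He (conj Hh0 Hhd)).
  assert (HRH := in_H_diff_quotient_remainder d rho m (U e) (U e0) U1 (Cminus e e0) Hrho Hm0 Hh
                   (UH e He) (UH e0 He0) HU1).
  destruct (sq_wnorm_le_sqnorm _ _ _ _ HRH) as [BR r0].
  pose proof (sqnorm_lt_of_Hnorm_lt _ _ _ _ _ HRH Ht0 HR) as Hr.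
  set (r := real (sqnorm d rho m (fun k j => Cminus (Cdiv (Cminus (U e k j) (U e0 k j)) (Cminus e e0)) (U1 k j))))
    in *.
  assert (Hr1 : r <= 1) by nra.
  eapply Rle_lt_trans; [apply Hnorm_le_of_sq_wnorm_le, (HC e (U e) r He Hh); [lra|split; auto|exact BR]|].
  apply sqrt_lin_lt with t; auto; split; auto; [apply Cmod_ge_0|lra].
Qed.

End TOperator.

Theorem proposition7p5 :
  forall (d : nat) (w : list R) (rho m beta : R) (f : Coef),
    (0 < d)%nat -> length w = d -> 0 < rho -> INR d + 5 < m ->
    0 < beta -> (forall n : Z, / sqrt beta <> IZR n) ->
    in_H d rho m f ->
    exists mu0 sigma0, 0 < sigma0 /\
      forall mu sigma, mu0 <= mu -> 0 < sigma <= sigma0 ->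
        (forall U : C -> Coef,
           in_H_Omega d rho m (Omega sigma mu) U ->
           in_H_Omega d rho m (Omega sigma mu) (fun e => T_op d w beta f e (U e))) /\
        (forall U : C -> Coef,
           analytic_on d rho m (Omega sigma mu) U ->
           analytic_on d rho m (Omega sigma mu) (fun e => T_op d w beta f e (U e))).
Proof.
  intros d w rho m beta f _ _ Hrho Hm Hbeta Hsb Hf.
  (* mu >= 2 keeps Omega in the sector |Im e| <= |e| / 2; the symbol bounds may depend on sigma *)
  exists 2, 1. split; [lra|]. intros mu sigma Hmu Hsig.
  destruct (symbol_bounds_Omega w beta sigma mu Hbeta Hsb Hsig Hmu) as [K [HK HD]].
  assert (Hm1 : INR d + 1 <= m) by lra. assert (Hrho0 : 0 <= rho) by lra.
  pose proof (analytic_on_T_op d w rho m beta f _ K Hrho0 Hm1 HK HD Hf) as HT.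
  split; [|exact HT].
  intros U [HA [M HM]]. split; [apply HT; auto|].
  exact (T_op_bounded d w rho m beta f _ K Hrho0 Hm1 HK HD Hf U M (proj1 HA) HM).
Qed.
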